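(* Let $S$ be a semilattice, let $0\le\delta<0.03$, and let $\theta:S\to M_2(\mathbb C)$ be a function (not assumed bounded) satisfying $\sup_{e,f\in S}\|\theta(e)\theta(f)-\theta(ef)\|_{HS}\le\delta$. Then there exists a multiplicative function $\phi:S\to M_2(\mathbb C)$ (i.e. $\phi(ef)=\phi(e)\phi(f)$), taking values in a set of commuting idempotents, such that $\sup_{x\in S}\|\theta(x)-\phi(x)\|_{HS}\le12\delta$. In particular, $(\ell^1(S),M_2(\mathbb C))$ is a uniformly AMNM pair.
   Context: A semilattice is a commutative semigroup in which every element is idempotent. $\|A\|_{HS}=(\operatorname{tr}(A^*A))^{1/2}$ is the Hilbert–Schmidt norm. $\ell^1(S)$ is the convolution algebra of absolutely summable functions on $S$ ($\delta_x*\delta_y=\delta_{xy}$). For a bounded linear $T:A\to B$ between Banach algebras, $\operatorname{def}(T)=\sup\{\|T(xy)-T(x)T(y)\|:\|x\|,\|y\|\le1\}$. $(A,B)$ is a uniformly AMNM pair if for every $\varepsilon>0$ there is $\delta>0$ such that every bounded linear $T:A\to B$ with $\operatorname{def}(T)\le\delta$ is within operator-norm distance $\varepsilon$ of some bounded multiplicative linear map $A\to B$ (here $M_2(\mathbb C)$ may be given any norm). *)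

From Stdlib Require Import Reals List ClassicalEpsilon.
Import ListNotations.
Open Scope R_scope.

Definition C : Type := (R * R)%type.
Definition C0 : C := (0, 0).
Definition Cadd (z w : C) : C := (fst z + fst w, snd z + snd w).
Definition Copp (z : C) : C := (- fst z, - snd z).
Definition Csub (z w : C) : C := Cadd z (Copp w).
Definition Cmul (z w : C) : C :=
  (fst z * fst w - snd z * snd w, fst z * snd w + snd z * fst w).
Definition Cnorm2 (z : C) : R := fst z * fst z + snd z * snd z.
Definition Cnorm (z : C) : R := sqrt (Cnorm2 z).

Record M2 : Type := mkM2 { m11 : C; m12 : C; m21 : C; m22 : C }.
Definition M0 : M2 := mkM2 C0 C0 C0 C0.
Definition Madd (A B : M2) : M2 :=
  mkM2 (Cadd (m11 A) (m11 B)) (Cadd (m12 A) (m12 B))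
       (Cadd (m21 A) (m21 B)) (Cadd (m22 A) (m22 B)).
Definition Mscale (c : C) (A : M2) : M2 :=
  mkM2 (Cmul c (m11 A)) (Cmul c (m12 A)) (Cmul c (m21 A)) (Cmul c (m22 A)).
Definition Mopp (A : M2) : M2 := Mscale (-1, 0) A.
Definition Msub (A B : M2) : M2 := Madd A (Mopp B).
Definition Mmul (A B : M2) : M2 :=
  mkM2 (Cadd (Cmul (m11 A) (m11 B)) (Cmul (m12 A) (m21 B)))
       (Cadd (Cmul (m11 A) (m12 B)) (Cmul (m12 A) (m22 B)))
       (Cadd (Cmul (m21 A) (m11 B)) (Cmul (m22 A) (m21 B)))
       (Cadd (Cmul (m21 A) (m12 B)) (Cmul (m22 A) (m22 B))).

Definition HS (A : M2) : R :=
  sqrt (Cnorm2 (m11 A) + Cnorm2 (m12 A) + Cnorm2 (m21 A) + Cnorm2 (m22 A)).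

Definition is_norm_M2 (N : M2 -> R) : Prop :=
  (forall A, 0 <= N A) /\
  (forall A, N A = 0 -> A = M0) /\
  (forall A B, N (Madd A B) <= N A + N B) /\
  (forall c A, N (Mscale c A) = Cnorm c * N A).

Definition is_semilattice (S : Type) (op : S -> S -> S) : Prop :=
  (forall x y z, op x (op y z) = op (op x y) z) /\
  (forall x y, op x y = op y x) /\
  (forall x, op x x = x).

(* finite subsets are represented by duplicate-free lists *)
Fixpoint csum_list {I : Type} (f : I -> C) (l : list I) : C :=
  match l with [] => C0 | i :: l' => Cadd (f i) (csum_list f l') end.
Fixpoint rsum_list {I : Type} (f : I -> R) (l : list I) : R :=
  match l with [] => 0 | i :: l' => f i + rsum_list f l' end.

Definition has_sum {I : Type} (f : I -> C) (L : C) : Prop :=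
  forall eps, 0 < eps -> exists l0, NoDup l0 /\
    forall l, NoDup l -> incl l0 l -> Cnorm (Csub (csum_list f l) L) < eps.

Definition usum {I : Type} (f : I -> C) : C :=
  epsilon (inhabits C0) (fun L => has_sum f L).

Definition is_l1 {S : Type} (f : S -> C) : Prop :=
  exists B, forall l, NoDup l -> rsum_list (fun s => Cnorm (f s)) l <= B.

Definition l1norm {S : Type} (f : S -> C) : R :=
  epsilon (inhabits 0)
    (fun L => is_lub (fun r => exists l, NoDup l /\
                         r = rsum_list (fun s => Cnorm (f s)) l) L).

Definition fadd {S : Type} (f g : S -> C) : S -> C := fun s => Cadd (f s) (g s).
Definition fscale {S : Type} (c : C) (f : S -> C) : S -> C := fun s => Cmul c (f s).

(* convolution: (f * g)(s) = sum_{x y = s} f x g y, so delta_x * delta_y = delta_{xy} *)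
Definition conv {S : Type} (op : S -> S -> S) (f g : S -> C) : S -> C :=
  fun s => usum (fun p : S * S =>
    if excluded_middle_informative (op (fst p) (snd p) = s)
    then Cmul (f (fst p)) (g (snd p)) else C0).

Definition bounded_linear {S : Type} (N : M2 -> R) (T : (S -> C) -> M2) : Prop :=
  (forall f g, is_l1 f -> is_l1 g -> T (fadd f g) = Madd (T f) (T g)) /\
  (forall c f, is_l1 f -> T (fscale c f) = Mscale c (T f)) /\
  (exists K, forall f, is_l1 f -> N (T f) <= K * l1norm f).

Definition multiplicative_map {S : Type} (op : S -> S -> S) (T : (S -> C) -> M2) : Prop :=
  forall f g, is_l1 f -> is_l1 g -> T (conv op f g) = Mmul (T f) (T g).

Definition defect_le {S : Type} (op : S -> S -> S) (N : M2 -> R)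
    (T : (S -> C) -> M2) (delta : R) : Prop :=
  forall f g, is_l1 f -> is_l1 g -> l1norm f <= 1 -> l1norm g <= 1 ->
    N (Msub (T (conv op f g)) (Mmul (T f) (T g))) <= delta.

Definition opdist_le {S : Type} (N : M2 -> R) (T psi : (S -> C) -> M2) (eps : R) : Prop :=
  forall f, is_l1 f -> l1norm f <= 1 -> N (Msub (T f) (psi f)) <= eps.

Definition uniformly_AMNM_l1_M2 {S : Type} (op : S -> S -> S) (N : M2 -> R) : Prop :=
  forall eps, 0 < eps -> exists delta, 0 < delta /\
    forall T : (S -> C) -> M2, bounded_linear N T -> defect_le op N T delta ->
      exists psi : (S -> C) -> M2,
        bounded_linear N psi /\ multiplicative_map op psi /\ opdist_le N T psi eps.

From Stdlib Require Import Reals List Permutation ClassicalEpsilon Classical FunctionalExtensionality Lra Lia Psatz Ring Field.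
From Coquelicot Require Import Compactness.
Import ListNotations.
Open Scope R_scope.

(* If ||B^2 - B||_HS <= dl < 0.03, a quartic relation coming from
      Cayley-Hamilton forces tr B to lie near 0, 1 or 2 (the trace type of B).  Near 0
      (resp. 2) B itself is near 0 (resp. I); near 1, B has two eigenvalues within 1.12 dl
      of 0 and 1, and B is within 1.59 dl of a rank-one idempotent (near_idempotent).
   2. Semilattice combinatorics.  If theta has multiplicative defect dl, each theta(x) is an
      approximate idempotent (x x = x).  The type is monotone for the order of S and type-2
      elements act neutrally; fixing x0 of type 1, with theta(x0) near an idempotent P, the
      type-1 elements split into those near P and those near I - P.  This yields two
      {0,1}-valued semicharacters c1, c2 with theta(x) within 12 dl of c1(x) P + c2(x) (I - P)
      (character_approximation), which is the first half of the theorem.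
   3. l^1(S).  Using unconditional sums over products and fibres, each c_i extends to a
      character of l^1(S), so f |-> c1(f) P + c2(f) (I - P) is bounded and multiplicative;
      it approximates a map T of small defect because T is determined by its values on
      point masses (extension_close).  All norms on M2 are equivalent to the HS norm (by
      compactness), which transfers the estimates and gives the uniform AMNM property. *)


(** * Complex numbers *)

Definition Creal (a : R) : C := (a, 0).
Definition C1 : C := Creal 1.

Lemma Ceq (z w : C) : fst z = fst w -> snd z = snd w -> z = w.
Proof. destruct z, w; simpl; intros; subst; reflexivity. Qed.

Lemma Cring_theory : ring_theory C0 C1 Cadd Cmul Csub Copp (@eq C).
Proof.
  constructor; intros; apply Ceq; unfold Cadd, Cmul, Csub, Copp, C0, C1, Creal; simpl; ring.
Qed.
Add Ring Cring : Cring_theory.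

Ltac cring := apply Ceq; unfold Creal, C1, C0, Cadd, Csub, Copp, Cmul; simpl; ring.

Lemma Cnorm2_nonneg z : 0 <= Cnorm2 z.
Proof. unfold Cnorm2; nra. Qed.
Lemma Cnorm_nonneg z : 0 <= Cnorm z.
Proof. apply sqrt_pos. Qed.
Lemma Cnorm_sq z : Cnorm z * Cnorm z = Cnorm2 z.
Proof. unfold Cnorm; rewrite sqrt_sqrt; auto using Cnorm2_nonneg. Qed.
Lemma Cnorm_mul z w : Cnorm (Cmul z w) = Cnorm z * Cnorm w.
Proof.
  unfold Cnorm. replace (Cnorm2 (Cmul z w)) with (Cnorm2 z * Cnorm2 w)
    by (unfold Cnorm2, Cmul; simpl; ring).
  rewrite sqrt_mult; auto using Cnorm2_nonneg.
Qed.
Lemma Cnorm_opp z : Cnorm (Copp z) = Cnorm z.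
Proof. unfold Cnorm, Cnorm2, Copp; simpl; f_equal; ring. Qed.
Lemma Cnorm_real r : Cnorm (Creal r) = Rabs r.
Proof.
  unfold Cnorm, Cnorm2, Creal; simpl. replace (r*r+0*0) with (r*r) by ring.
  apply sqrt_Rsqr_abs.
Qed.
Lemma Cnorm_C0 : Cnorm C0 = 0.
Proof. unfold Cnorm, Cnorm2, C0; simpl. replace (0*0+0*0) with 0 by ring. apply sqrt_0. Qed.
Lemma Cnorm_C1 : Cnorm C1 = 1.
Proof. unfold C1. rewrite Cnorm_real. apply Rabs_R1. Qed.

Lemma sqrt_le_sq a b : 0 <= b -> a <= b * b -> sqrt a <= b.
Proof. intros Hb H. rewrite <- (sqrt_square b) by auto. apply sqrt_le_1_alt. lra. Qed.
Lemma sq_le u v : 0 <= v -> u*u <= v*v -> u <= v.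
Proof. intros. nra. Qed.
Lemma sq_mono u v : 0 <= u -> u <= v -> u*u <= v*v.
Proof. intros. nra. Qed.

Lemma Cnorm_re_im z : Rabs (fst z) <= Cnorm z /\ Rabs (snd z) <= Cnorm z.
Proof.
  destruct z as [x y]. unfold Cnorm, Cnorm2; simpl.
  split; rewrite <- sqrt_Rsqr_abs; apply sqrt_le_1_alt;
    unfold Rsqr; pose proof (Rle_0_sqr x); pose proof (Rle_0_sqr y); unfold Rsqr in *; lra.
Qed.

Lemma Cnorm_le_re_im z : Cnorm z <= Rabs (fst z) + Rabs (snd z).
Proof.
  pose proof (Rabs_pos (fst z)); pose proof (Rabs_pos (snd z)).
  apply sqrt_le_sq; [lra|]. unfold Cnorm2.
  pose proof (Rsqr_abs (fst z)); pose proof (Rsqr_abs (snd z)). unfold Rsqr in *. nra.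
Qed.

Lemma Cnorm_triangle z w : Cnorm (Cadd z w) <= Cnorm z + Cnorm w.
Proof.
  pose proof (Cnorm_nonneg z); pose proof (Cnorm_nonneg w).
  apply sqrt_le_sq; [lra|].
  destruct z as [a b], w as [c d]. unfold Cnorm2, Cadd; simpl.
  pose proof (Cnorm_sq (a,b)) as E1; pose proof (Cnorm_sq (c,d)) as E2.
  unfold Cnorm2 in E1, E2; simpl in E1, E2.
  set (x := Cnorm (a,b)) in *. set (y := Cnorm (c,d)) in *.
  (* Cauchy-Schwarz in R^2 *)
  assert (a*c + b*d <= x*y).
  { apply sq_le; [nra|].
    replace ((x*y)*(x*y)) with ((x*x)*(y*y)) by ring. rewrite E1, E2.
    pose proof (Rle_0_sqr (a*d-b*c)); unfold Rsqr in *; nra. }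
  nra.
Qed.

Lemma Cnorm_sub_le z w : Cnorm (Csub z w) <= Cnorm z + Cnorm w.
Proof. unfold Csub. rewrite <- (Cnorm_opp w). apply Cnorm_triangle. Qed.

Lemma Cnorm_sub_sym z w : Cnorm (Csub z w) = Cnorm (Csub w z).
Proof. replace (Csub z w) with (Copp (Csub w z)) by ring. apply Cnorm_opp. Qed.

Lemma Cnorm_reverse_triangle z w : Cnorm z - Cnorm w <= Cnorm (Csub z w).
Proof.
  pose proof (Cnorm_triangle (Csub z w) w).
  replace (Cadd (Csub z w) w) with z in H by ring. lra.
Qed.

Lemma Cnorm2_zero z : Cnorm2 z <= 0 -> z = C0.
Proof.
  intro h. destruct z as [x y]. unfold Cnorm2 in h; simpl in h.
  apply Ceq; simpl; nra.
Qed.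

Lemma Cnorm_eq0 z : Cnorm z = 0 -> z = C0.
Proof. intro H. apply Cnorm2_zero. rewrite <- Cnorm_sq, H. lra. Qed.

Lemma Cnorm_double z : Cnorm (Cadd z z) = 2 * Cnorm z.
Proof.
  replace (Cadd z z) with (Cmul (Creal 2) z) by cring.
  rewrite Cnorm_mul, Cnorm_real, Rabs_right by lra. ring.
Qed.

Lemma Cnorm_real_sep t a b : Rabs (a - b) - Cnorm (Csub t (Creal b)) <= Cnorm (Csub t (Creal a)).
Proof.
  pose proof (Cnorm_triangle (Csub t (Creal a)) (Copp (Csub t (Creal b)))).
  replace (Cadd (Csub t (Creal a)) (Copp (Csub t (Creal b)))) with (Creal (b - a)) in H by cring.
  rewrite Cnorm_real, Cnorm_opp, Rabs_minus_sym in H. lra.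
Qed.

Lemma Cnorm_sub0 t : Cnorm (Csub t (Creal 0)) = Cnorm t.
Proof. f_equal. cring. Qed.

(** * 2x2 complex matrices *)

Definition MI : M2 := mkM2 C1 C0 C0 C1.
Definition tr (A : M2) : C := Cadd (m11 A) (m22 A).
Definition det (A : M2) : C := Csub (Cmul (m11 A) (m22 A)) (Cmul (m12 A) (m21 A)).

Lemma M2eq (A B : M2) :
  m11 A = m11 B -> m12 A = m12 B -> m21 A = m21 B -> m22 A = m22 B -> A = B.
Proof. destruct A, B; simpl; intros; subst; reflexivity. Qed.

(* Normal forms of real constants, so that [ring] sees them as ring constants. *)
Lemma Cm1 : ((-1,0) : C) = Copp C1.
Proof. cring. Qed.
Lemma Creal2 : Creal 2 = Cadd C1 C1.
Proof. cring. Qed.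
Lemma Creal1 : Creal 1 = C1.
Proof. reflexivity. Qed.
Lemma Creal0 : Creal 0 = C0.
Proof. reflexivity. Qed.

Ltac mat_ring := first [apply M2eq | idtac];
  unfold tr, det, Madd, Msub, Mopp, Mscale, Mmul, MI, M0; rewrite ?Cm1, ?Creal2, ?Creal1, ?Creal0; simpl; ring.

Lemma tr_sub A B : tr (Msub A B) = Csub (tr A) (tr B).
Proof. mat_ring. Qed.
Lemma tr_add A B : tr (Madd A B) = Cadd (tr A) (tr B).
Proof. mat_ring. Qed.
Lemma tr_MI : tr MI = Creal 2.
Proof. cring. Qed.

Definition HS2 (A : M2) : R :=
  Cnorm2 (m11 A) + Cnorm2 (m12 A) + Cnorm2 (m21 A) + Cnorm2 (m22 A).

Lemma HS2_nonneg A : 0 <= HS2 A.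
Proof.
  unfold HS2; pose proof (Cnorm2_nonneg (m11 A)); pose proof (Cnorm2_nonneg (m12 A));
  pose proof (Cnorm2_nonneg (m21 A)); pose proof (Cnorm2_nonneg (m22 A)); lra.
Qed.
Lemma HS_nonneg A : 0 <= HS A.
Proof. apply sqrt_pos. Qed.
Lemma HS_sq A : HS A * HS A = HS2 A.
Proof. unfold HS. rewrite sqrt_sqrt; [reflexivity | apply HS2_nonneg]. Qed.

Lemma HS2_entries A : HS2 A = Cnorm (m11 A) * Cnorm (m11 A) + Cnorm (m12 A) * Cnorm (m12 A)
   + Cnorm (m21 A) * Cnorm (m21 A) + Cnorm (m22 A) * Cnorm (m22 A).
Proof. unfold HS2; rewrite !Cnorm_sq; reflexivity. Qed.
Lemma HS_entries A : HS A = sqrt (Cnorm (m11 A) * Cnorm (m11 A) + Cnorm (m12 A) * Cnorm (m12 A)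
   + Cnorm (m21 A) * Cnorm (m21 A) + Cnorm (m22 A) * Cnorm (m22 A)).
Proof. rewrite <- HS2_entries. reflexivity. Qed.

Lemma Cnorm_entry_le A : Cnorm (m11 A) <= HS A /\ Cnorm (m12 A) <= HS A /\
                         Cnorm (m21 A) <= HS A /\ Cnorm (m22 A) <= HS A.
Proof.
  pose proof (HS_nonneg A); pose proof (HS_sq A); rewrite HS2_entries in H0.
  pose proof (Cnorm_nonneg (m11 A)); pose proof (Cnorm_nonneg (m12 A));
  pose proof (Cnorm_nonneg (m21 A)); pose proof (Cnorm_nonneg (m22 A)).
  repeat split; apply sq_le; nra.
Qed.

Lemma HS_scale c A : HS (Mscale c A) = Cnorm c * HS A.
Proof.
  unfold HS. rewrite <- (sqrt_Rsqr (Cnorm c)) by apply Cnorm_nonneg.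
  rewrite <- sqrt_mult by (apply Rle_0_sqr || apply HS2_nonneg). f_equal.
  unfold Rsqr. rewrite Cnorm_sq. fold (HS2 (Mscale c A)) (HS2 A).
  destruct A; unfold HS2, Cnorm2, Mscale, Cmul; simpl. ring.
Qed.

Lemma minkowski4 x1 x2 x3 x4 y1 y2 y3 y4 :
  sqrt ((x1+y1)*(x1+y1) + (x2+y2)*(x2+y2) + (x3+y3)*(x3+y3) + (x4+y4)*(x4+y4))
  <= sqrt (x1*x1+x2*x2+x3*x3+x4*x4) + sqrt (y1*y1+y2*y2+y3*y3+y4*y4).
Proof.
  set (X := x1*x1+x2*x2+x3*x3+x4*x4). set (Y := y1*y1+y2*y2+y3*y3+y4*y4).
  assert (HX : 0 <= X) by (unfold X; nra). assert (HY : 0 <= Y) by (unfold Y; nra).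
  pose proof (sqrt_pos X); pose proof (sqrt_pos Y).
  apply sqrt_le_sq; [lra|].
  assert (x1*y1+x2*y2+x3*y3+x4*y4 <= sqrt X * sqrt Y).
  { rewrite <- sqrt_mult by auto. apply Rsqr_incr_0_var; [|apply sqrt_pos].
    rewrite Rsqr_sqrt by (apply Rmult_le_pos; auto). unfold Rsqr, X, Y.
    assert (forall p q r s : R, 0 <= (p*q-r*s)*(p*q-r*s)) by (intros; apply Rle_0_sqr).
    pose proof (H1 x1 y2 x2 y1); pose proof (H1 x1 y3 x3 y1); pose proof (H1 x1 y4 x4 y1);
    pose proof (H1 x2 y3 x3 y2); pose proof (H1 x2 y4 x4 y2); pose proof (H1 x3 y4 x4 y3).
    lra. }
  assert (sqrt X * sqrt X = X) by (apply sqrt_sqrt; auto).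
  assert (sqrt Y * sqrt Y = Y) by (apply sqrt_sqrt; auto).
  unfold X, Y in *. nra.
Qed.

Lemma HS_triangle A B : HS (Madd A B) <= HS A + HS B.
Proof.
  rewrite (HS_entries (Madd A B)), (HS_entries A), (HS_entries B).
  eapply Rle_trans; [| apply minkowski4].
  apply sqrt_le_1_alt. destruct A, B; unfold Madd; simpl.
  repeat match goal with |- context [Cnorm (Cadd ?z ?w)] =>
    let H := fresh in pose proof (Cnorm_triangle z w) as H;
    pose proof (Cnorm_nonneg (Cadd z w));
    apply sq_mono in H; [|apply Cnorm_nonneg];
    set (Cnorm (Cadd z w)) in * end.
  lra.
Qed.

Lemma cauchy_schwarz2 a b c d : (a*c+b*d)*(a*c+b*d) <= (a*a+b*b)*(c*c+d*d).
Proof. pose proof (Rle_0_sqr (a*d-b*c)); unfold Rsqr in *; nra. Qed.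

Lemma HS_mul A B : HS (Mmul A B) <= HS A * HS B.
Proof.
  rewrite (HS_entries (Mmul A B)), (HS_entries A), (HS_entries B).
  rewrite <- sqrt_mult.
  2:{ pose proof (Cnorm_nonneg (m11 A)); pose proof (Cnorm_nonneg (m12 A));
      pose proof (Cnorm_nonneg (m21 A)); pose proof (Cnorm_nonneg (m22 A)); nra. }
  2:{ pose proof (Cnorm_nonneg (m11 B)); pose proof (Cnorm_nonneg (m12 B));
      pose proof (Cnorm_nonneg (m21 B)); pose proof (Cnorm_nonneg (m22 B)); nra. }
  apply sqrt_le_1_alt. destruct A as [a1 a2 a3 a4], B as [b1 b2 b3 b4]; unfold Mmul; simpl.
  assert (dot : forall a b c d, Cnorm (Cadd (Cmul a c) (Cmul b d)) <= Cnorm a * Cnorm c + Cnorm b * Cnorm d).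
  { intros. eapply Rle_trans; [apply Cnorm_triangle|]. rewrite !Cnorm_mul. lra. }
  pose proof (dot a1 a2 b1 b3) as H1; pose proof (dot a1 a2 b2 b4) as H2;
  pose proof (dot a3 a4 b1 b3) as H3; pose proof (dot a3 a4 b2 b4) as H4.
  apply sq_mono in H1; [|apply Cnorm_nonneg]. apply sq_mono in H2; [|apply Cnorm_nonneg].
  apply sq_mono in H3; [|apply Cnorm_nonneg]. apply sq_mono in H4; [|apply Cnorm_nonneg].
  pose proof (cauchy_schwarz2 (Cnorm a1) (Cnorm a2) (Cnorm b1) (Cnorm b3)).
  pose proof (cauchy_schwarz2 (Cnorm a1) (Cnorm a2) (Cnorm b2) (Cnorm b4)).
  pose proof (cauchy_schwarz2 (Cnorm a3) (Cnorm a4) (Cnorm b1) (Cnorm b3)).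
  pose proof (cauchy_schwarz2 (Cnorm a3) (Cnorm a4) (Cnorm b2) (Cnorm b4)).
  lra.
Qed.

Lemma HS_opp A : HS (Mopp A) = HS A.
Proof. unfold Mopp. rewrite HS_scale, Cm1, Cnorm_opp, Cnorm_C1. ring. Qed.

Lemma HS_sub_sym A B : HS (Msub A B) = HS (Msub B A).
Proof. replace (Msub A B) with (Mopp (Msub B A)) by mat_ring. apply HS_opp. Qed.

Lemma HS_sub_le A B : HS (Msub A B) <= HS A + HS B.
Proof. unfold Msub. rewrite <- (HS_opp B). apply HS_triangle. Qed.

Lemma HS_sub_triangle A B D : HS (Msub A D) <= HS (Msub A B) + HS (Msub B D).
Proof. replace (Msub A D) with (Madd (Msub A B) (Msub B D)) by mat_ring. apply HS_triangle. Qed.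

(* A rational upper bound for sqrt 2 = HS I, used in all numerical estimates. *)
Definition sqrt2_ub := 1.4143.

Lemma HS_scale_MI d : HS (Mscale d MI) <= sqrt2_ub * Cnorm d.
Proof.
  rewrite HS_scale. pose proof (Cnorm_nonneg d).
  assert (HS MI <= sqrt2_ub).
  { unfold HS, MI, C1, C0, Creal, Cnorm2; simpl. apply sqrt_le_sq; unfold sqrt2_ub; lra. }
  nra.
Qed.

Lemma Cnorm_tr A : Cnorm (tr A) <= sqrt2_ub * HS A.
Proof.
  unfold tr. eapply Rle_trans; [apply Cnorm_triangle|].
  pose proof (HS_nonneg A).
  apply sq_le; [unfold sqrt2_ub; nra|].
  replace (sqrt2_ub * HS A * (sqrt2_ub * HS A)) with (sqrt2_ub*sqrt2_ub*(HS A * HS A)) by ring.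
  rewrite HS_sq, HS2_entries.
  pose proof (Rle_0_sqr (Cnorm (m11 A) - Cnorm (m22 A))).
  pose proof (Rle_0_sqr (Cnorm (m12 A))). pose proof (Rle_0_sqr (Cnorm (m21 A))).
  unfold Rsqr, sqrt2_ub in *. nra.
Qed.

Lemma Cnorm_det A : Cnorm (det A) <= HS A * HS A / 2.
Proof.
  unfold det, Csub. eapply Rle_trans; [apply Cnorm_triangle|]. rewrite Cnorm_opp, !Cnorm_mul.
  rewrite HS_sq, HS2_entries.
  pose proof (Rle_0_sqr (Cnorm (m11 A) - Cnorm (m22 A))).
  pose proof (Rle_0_sqr (Cnorm (m12 A) - Cnorm (m21 A))).
  unfold Rsqr in *. nra.
Qed.

(** * Approximately idempotent 2x2 matrices *)

Definition defect (B : M2) : M2 := Msub (Mmul B B) B.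

(* Cayley-Hamilton consequences relating t = tr B, d = det B and D = defect B. *)
Lemma defect_tr B : Cadd (det B) (det B) = Csub (Csub (Cmul (tr B) (tr B)) (tr B)) (tr (defect B)).
Proof. unfold defect; mat_ring. Qed.
Lemma defect_det B : det (defect B) = Cmul (det B) (Cadd (Csub C1 (tr B)) (det B)).
Proof. unfold defect; destruct B; mat_ring. Qed.
Lemma defect_linear B : Mscale (Csub (tr B) C1) B = Madd (defect B) (Mscale (det B) MI).
Proof. unfold defect; destruct B; mat_ring. Qed.
Lemma defect_trace_eq B : Cmul (tr B) (Csub (tr B) C1) = Cadd (tr (defect B)) (Cadd (det B) (det B)).
Proof. unfold defect; destruct B; mat_ring. Qed.
Lemma defect_quartic B :
  Cmul (Cmul (Csub (tr B) C1) (Csub (tr B) C1))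
       (Csub (Cmul (tr B) (Csub (tr B) (Creal 2))) (Cadd (tr (defect B)) (tr (defect B))))
   = Csub (Cadd (Cadd (det (defect B)) (det (defect B))) (Cadd (det (defect B)) (det (defect B))))
          (Cmul (tr (defect B)) (tr (defect B))).
Proof. unfold defect; destruct B; mat_ring. Qed.

Lemma defect_compl A : defect (Msub MI A) = defect A.
Proof. unfold defect; mat_ring. Qed.
Lemma tr_compl A : tr (Msub MI A) = Copp (Csub (tr A) (Creal 2)).
Proof. mat_ring. Qed.

Lemma defect_tr_det_bounds B eta : HS (defect B) <= eta ->
  Cnorm (tr (defect B)) <= sqrt2_ub * eta /\ Cnorm (det (defect B)) <= eta * eta / 2.
Proof.
  intro HD. pose proof (HS_nonneg (defect B)). split.
  - eapply Rle_trans; [apply Cnorm_tr|]. unfold sqrt2_ub; nra.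
  - eapply Rle_trans; [apply Cnorm_det|]. nra.
Qed.

Lemma Cnorm_sub_C1_ge t : 1 - Cnorm t <= Cnorm (Csub t C1).
Proof. rewrite Cnorm_sub_sym. pose proof (Cnorm_reverse_triangle C1 t). rewrite Cnorm_C1 in H. lra. Qed.

(* Rigidity near 0: a matrix with small defect and small trace is small.  The bound
   is self-improving, since the trace bound r may be fed back in. *)
Lemma small_trace_estimate (B : M2) (eta r : R) :
  HS (defect B) <= eta -> Cnorm (tr B) <= r -> 0 <= eta -> 0 <= r < 1 ->
  0 < 1 - r - (r*r + r + sqrt2_ub*eta)/2 ->
  HS B * (1 - r) <= eta + sqrt2_ub * (eta*eta/(2*(1 - r - (r*r + r + sqrt2_ub*eta)/2))) /\
  Cnorm (tr B) * (1 - r) <= sqrt2_ub*eta + eta*eta/(1 - r - (r*r + r + sqrt2_ub*eta)/2).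
Proof.
  intros HD Ht He Hr Hg.
  set (g := 1 - r - (r*r + r + sqrt2_ub*eta)/2) in *.
  destruct (defect_tr_det_bounds B eta HD) as [Htau HdD].
  pose proof (defect_tr B) as E1. pose proof (defect_det B) as E2.
  pose proof (defect_linear B) as E3. pose proof (defect_trace_eq B) as E4.
  set (D := defect B) in *. set (t := tr B) in *. set (d := det B) in *.
  assert (H2d : 2 * Cnorm d <= r*r + r + sqrt2_ub*eta).
  { rewrite <- Cnorm_double, E1.
    eapply Rle_trans; [apply Cnorm_sub_le|].
    eapply Rle_trans; [apply Rplus_le_compat_r; apply Cnorm_sub_le|].
    rewrite Cnorm_mul. pose proof (Cnorm_nonneg t). nra. }
  assert (Hg2 : g <= Cnorm (Cadd (Csub C1 t) d)).
  { pose proof (Cnorm_reverse_triangle (Csub C1 t) (Copp d)).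
    replace (Csub (Csub C1 t) (Copp d)) with (Cadd (Csub C1 t) d) in H by ring.
    rewrite Cnorm_opp in H. pose proof (Cnorm_sub_C1_ge t). rewrite Cnorm_sub_sym in H0.
    unfold g. lra. }
  assert (Hd : Cnorm d <= eta*eta/(2*g)).
  { apply Rmult_le_reg_r with (2*g); [lra|].
    unfold Rdiv. rewrite Rmult_assoc, Rinv_l by lra. rewrite Rmult_1_r.
    assert (Cnorm d * Cnorm (Cadd (Csub C1 t) d) <= eta*eta/2) by (rewrite <- Cnorm_mul, <- E2; auto).
    pose proof (Cnorm_nonneg d). nra. }
  assert (Ht1 : 1 - r <= Cnorm (Csub t C1)) by (pose proof (Cnorm_sub_C1_ge t); lra).
  split.
  - assert (HS (Mscale (Csub t C1) B) <= eta + sqrt2_ub * Cnorm d).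
    { rewrite E3. eapply Rle_trans; [apply HS_triangle|]. pose proof (HS_scale_MI d). lra. }
    rewrite HS_scale in H. pose proof (HS_nonneg B).
    assert (HS B * (1 - r) <= Cnorm (Csub t C1) * HS B) by nra.
    unfold sqrt2_ub in *. pose proof (Cnorm_nonneg d). nra.
  - assert (Cnorm t * Cnorm (Csub t C1) <= sqrt2_ub*eta + 2 * Cnorm d).
    { rewrite <- Cnorm_mul, E4, <- Cnorm_double. eapply Rle_trans; [apply Cnorm_triangle|]. lra. }
    assert (2 * Cnorm d <= eta*eta/g) by (replace (eta*eta/g) with (2*(eta*eta/(2*g))) by (field; lra); lra).
    pose proof (Cnorm_nonneg t). nra.
Qed.

Lemma small_trace_bound (B : M2) (eta r g0 K Kt : R) :
  HS (defect B) <= eta -> Cnorm (tr B) <= r -> 0 <= eta -> 0 <= r -> r < 1 ->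
  0 < g0 -> g0 <= 1 - r - (r*r + r + sqrt2_ub*eta)/2 ->
  eta + sqrt2_ub * (eta*eta/(2*g0)) <= K * (1 - r) ->
  sqrt2_ub*eta + eta*eta/g0 <= Kt * (1 - r) ->
  HS B <= K /\ Cnorm (tr B) <= Kt.
Proof.
  intros HD Ht He Hr Hr1 Hg0 Hg HK HKt.
  destruct (small_trace_estimate B eta r HD Ht He (conj Hr Hr1)) as [H1 H2]; [lra|].
  set (g := 1 - r - (r*r + r + sqrt2_ub*eta)/2) in *.
  assert (eta*eta/(2*g) <= eta*eta/(2*g0)).
  { unfold Rdiv. apply Rmult_le_compat_l; [nra|]. apply Rinv_le_contravar; lra. }
  assert (eta*eta/g <= eta*eta/g0).
  { unfold Rdiv. apply Rmult_le_compat_l; [nra|]. apply Rinv_le_contravar; lra. }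
  split; apply Rmult_le_reg_r with (1 - r); try lra; unfold sqrt2_ub in *; nra.
Qed.

Lemma trace_quartic_bound (B : M2) (eta : R) :
  HS (defect B) <= eta -> 0 <= eta ->
  Cnorm (Csub (tr B) C1) * Cnorm (Csub (tr B) C1) *
    (Cnorm (tr B) * Cnorm (Csub (tr B) (Creal 2)) - 2 * sqrt2_ub * eta)
  <= 2*eta*eta + sqrt2_ub*sqrt2_ub*eta*eta.
Proof.
  intros HD He. pose proof (defect_quartic B) as E.
  destruct (defect_tr_det_bounds B eta HD) as [Htau HdD].
  set (D := defect B) in *. set (t := tr B) in *.
  apply (f_equal Cnorm) in E. rewrite !Cnorm_mul in E.
  assert (Cnorm (Csub (Cadd (Cadd (det D) (det D)) (Cadd (det D) (det D))) (Cmul (tr D) (tr D)))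
     <= 2*eta*eta + sqrt2_ub*sqrt2_ub*eta*eta).
  { eapply Rle_trans; [apply Cnorm_sub_le|]. rewrite Cnorm_mul, !Cnorm_double.
    pose proof (Cnorm_nonneg (tr D)). nra. }
  assert (Cnorm (Cmul t (Csub t (Creal 2))) - 2 * sqrt2_ub * eta <=
          Cnorm (Csub (Cmul t (Csub t (Creal 2))) (Cadd (tr D) (tr D)))).
  { pose proof (Cnorm_reverse_triangle (Cmul t (Csub t (Creal 2))) (Cadd (tr D) (tr D))).
    rewrite Cnorm_double in H0. lra. }
  rewrite Cnorm_mul in H0.
  pose proof (Cnorm_nonneg (Csub t C1)).
  assert (0 <= Cnorm (Csub t C1) * Cnorm (Csub t C1)) by nra.
  nra.
Qed.

Lemma trace_trichotomy B dl : 0 <= dl -> dl < 0.03 -> HS (defect B) <= dl ->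
  Cnorm (tr B) <= 0.4 \/ Cnorm (Csub (tr B) C1) <= 0.4 \/ Cnorm (Csub (tr B) (Creal 2)) <= 0.4.
Proof.
  intros H0 H1 HD. pose proof (trace_quartic_bound _ _ HD H0).
  set (t := tr B) in *.
  destruct (Rle_dec (Cnorm t) 0.4); auto. destruct (Rle_dec (Cnorm (Csub t C1)) 0.4); auto.
  destruct (Rle_dec (Cnorm (Csub t (Creal 2))) 0.4); auto. exfalso.
  assert (0.16 <= Cnorm t * Cnorm (Csub t (Creal 2))) by nra.
  assert (0.16 <= Cnorm (Csub t C1) * Cnorm (Csub t C1)) by nra.
  unfold sqrt2_ub in *. nra.
Qed.

(* Trace near 0: B is within 1.12 dl of 0 (two rounds of the self-improving estimate). *)
Lemma near0 (B : M2) (dl : R) : 0 <= dl -> dl < 0.03 ->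
  HS (defect B) <= dl -> Cnorm (tr B) <= 0.4 ->
  HS B <= 1.12 * dl /\ Cnorm (tr B) <= 1.6 * dl.
Proof.
  intros H0 H1 HD Ht.
  assert (dl*dl <= 0.03*dl) by nra. assert (0 <= dl*dl) by nra.
  destruct (small_trace_bound B dl 0.4 0.29 (2*dl) (2.6*dl) HD Ht) as [_ Ht2];
    try lra; try (unfold sqrt2_ub; lra).
  apply (small_trace_bound B dl (2.6*dl) 0.85); try lra; unfold sqrt2_ub; nra.
Qed.

(* Trace near 2: apply near0 to the complement I - A. *)
Lemma near2 (A : M2) (dl : R) : 0 <= dl -> dl < 0.03 ->
  HS (defect A) <= dl -> Cnorm (Csub (tr A) (Creal 2)) <= 0.4 ->
  HS (Msub MI A) <= 1.12 * dl /\ Cnorm (Csub (tr A) (Creal 2)) <= 1.6 * dl.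
Proof.
  intros H0 H1 HD Ht. rewrite <- defect_compl in HD.
  rewrite <- (Cnorm_opp (Csub _ _)), <- tr_compl in *.
  apply near0; auto.
Qed.

(* One step of the bootstrap near trace 1. *)
Lemma near1_step (B : M2) (eta rho : R) :
  HS (defect B) <= eta -> 0 <= eta -> Cnorm (Csub (tr B) C1) <= rho ->
  Cnorm (Csub (tr B) C1) * Cnorm (Csub (tr B) C1) * ((1 - rho*rho) - 2*sqrt2_ub*eta)
   <= 2*eta*eta + sqrt2_ub*sqrt2_ub*eta*eta.
Proof.
  intros HD He Hr. pose proof (trace_quartic_bound B eta HD He).
  set (t := tr B) in *.
  assert (1 - rho*rho <= Cnorm t * Cnorm (Csub t (Creal 2))).
  { rewrite <- Cnorm_mul.
    replace (Cmul t (Csub t (Creal 2))) with (Csub (Cmul (Csub t C1) (Csub t C1)) C1) by cring.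
    pose proof (Cnorm_reverse_triangle C1 (Cmul (Csub t C1) (Csub t C1))).
    rewrite Cnorm_C1, Cnorm_mul in H0. rewrite (Cnorm_sub_sym _ C1).
    pose proof (Cnorm_nonneg (Csub t C1)). nra. }
  pose proof (Cnorm_nonneg (Csub t C1)).
  assert (0 <= Cnorm (Csub t C1) * Cnorm (Csub t C1)) by nra.
  nra.
Qed.

(* Trace near 1: two rounds of near1_step bring |tr B - 1| down to 2.1 dl. *)
Lemma near1 (B : M2) (dl : R) : 0 <= dl -> dl < 0.03 ->
  HS (defect B) <= dl -> Cnorm (Csub (tr B) C1) <= 0.4 ->
  Cnorm (Csub (tr B) C1) <= 2.1 * dl.
Proof.
  intros H0 H1 HD Ht.
  assert (dl*dl <= 0.03*dl) by nra. assert (0 <= dl*dl) by nra.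
  pose proof (near1_step B dl 0.4 HD H0 Ht).
  pose proof (Cnorm_nonneg (Csub (tr B) C1)).
  set (u := Cnorm (Csub (tr B) C1)) in *.
  assert (u <= 2.31*dl) by (apply sq_le; [lra|]; unfold sqrt2_ub in *; nra).
  pose proof (near1_step B dl (2.31*dl) HD H0 H5). fold u in H6.
  apply sq_le; [lra|]. unfold sqrt2_ub in *. nra.
Qed.

Lemma no_negative_trace (B : M2) (dl m : R) : 0 <= dl -> dl < 0.03 ->
  HS (defect B) <= 4*dl -> Cnorm (Csub (tr B) (Creal m)) <= 4.2*dl -> (m = -1 \/ m = -2) -> False.
Proof.
  intros h0 h1 HD Ht Hm.
  pose proof (trace_quartic_bound B (4*dl) HD ltac:(lra)).
  set (t := tr B) in *.
  pose proof (Cnorm_real_sep t 1 m). pose proof (Cnorm_real_sep t 0 m). pose proof (Cnorm_real_sep t 2 m).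
  rewrite Cnorm_sub0 in H1. unfold C1 in *.
  destruct Hm; subst m.
  - rewrite (Rabs_right (1 - -1)), (Rabs_right (0 - -1)), (Rabs_right (2 - -1)) in * by lra.
    assert (0.874 * 2.874 <= Cnorm t * Cnorm (Csub t (Creal 2))) by (apply Rmult_le_compat; lra).
    assert (1.874 * 1.874 <= Cnorm (Csub t (Creal 1)) * Cnorm (Csub t (Creal 1))) by (apply Rmult_le_compat; lra).
    unfold sqrt2_ub in *. nra.
  - rewrite (Rabs_right (1 - -2)), (Rabs_right (0 - -2)), (Rabs_right (2 - -2)) in * by lra.
    assert (1.874 * 3.874 <= Cnorm t * Cnorm (Csub t (Creal 2))) by (apply Rmult_le_compat; lra).
    assert (2.874 * 2.874 <= Cnorm (Csub t (Creal 1)) * Cnorm (Csub t (Creal 1))) by (apply Rmult_le_compat; lra).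
    unfold sqrt2_ub in *. nra.
Qed.

(** * An approximate idempotent of trace about 1 is near a rank-one idempotent *)

Definition Cconj (z : C) : C := (fst z, - snd z).

(* Principal square root, valid on the right half-plane. *)
Definition csqrt (z : C) : C :=
  let u := sqrt ((Cnorm z + fst z) / 2) in (u, snd z / (2 * u)).

Lemma csqrt_spec z : 0 < fst z -> Cmul (csqrt z) (csqrt z) = z /\ 0 <= fst (csqrt z).
Proof.
  intro h. destruct z as [x y]. simpl in h. unfold csqrt, Cmul; simpl.
  destruct (Cnorm_re_im (x,y)) as [H _]. simpl in H. rewrite Rabs_right in H by lra.
  set (n := Cnorm (x,y)) in *.
  assert (hn : n * n = x*x + y*y) by (unfold n; rewrite Cnorm_sq; reflexivity).
  assert (hp : 0 < (n + x)/2) by lra.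
  pose proof (sqrt_lt_R0 _ hp). set (u := sqrt ((n+x)/2)) in *.
  assert (hu : u * u = (n+x)/2) by (unfold u; apply sqrt_sqrt; lra).
  split; [|lra]. apply Ceq; simpl.
  - field_simplify; [|lra].
    replace (u^4) with ((u*u)*(u*u)) by ring. rewrite hu.
    replace (u^2) with (u*u) by ring. rewrite hu. field_simplify; [|lra].
    replace (n^2) with (n*n) by ring. rewrite hn. field. lra.
  - field. lra.
Qed.

Lemma sqrt_near_one (D : C) : Cnorm (Csub D C1) <= 0.35 ->
  exists s, Cmul s s = D /\ Cnorm (Csub s C1) <= 0.212.
Proof.
  intro HD.
  assert (HDr : 0 < fst D).
  { destruct (Cnorm_re_im (Csub D C1)) as [H _].
    replace (fst (Csub D C1)) with (fst D - 1) in H by (unfold Csub, Cadd, Copp, C1, Creal; simpl; ring).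
    unfold Rabs in H. destruct Rcase_abs in H; lra. }
  destruct (csqrt_spec D HDr) as [hs hs0]. set (s := csqrt D) in *. clearbody s.
  exists s. split; auto.
  (* |s - 1| |s + 1| = |D - 1| with |s + 1| >= max (1, 2 - |s - 1|) *)
  assert (Cnorm (Csub s C1) * Cnorm (Cadd s C1) <= 0.35).
  { rewrite <- Cnorm_mul. replace (Cmul (Csub s C1) (Cadd s C1)) with (Csub (Cmul s s) C1) by ring.
    rewrite hs. auto. }
  assert (1 <= Cnorm (Cadd s C1)).
  { destruct (Cnorm_re_im (Cadd s C1)) as [H1 _].
    replace (fst (Cadd s C1)) with (fst s + 1) in H1 by (unfold Cadd, C1, Creal; simpl; ring).
    rewrite Rabs_right in H1 by lra. lra. }
  pose proof (Cnorm_nonneg (Csub s C1)).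
  assert (Cnorm (Csub s C1) <= 0.35) by nra.
  assert (2 - Cnorm (Csub s C1) <= Cnorm (Cadd s C1)).
  { pose proof (Cnorm_reverse_triangle (Creal 2) (Copp (Csub s C1))).
    rewrite Cnorm_opp, Cnorm_real, Rabs_right in H3 by lra.
    replace (Csub (Creal 2) (Copp (Csub s C1))) with (Cadd s C1) in H3 by cring. lra. }
  nra.
Qed.

(* If |t - 1| and |d| are small, x^2 - t x + d has a root a near 0 whose
   companion root t - a is near 1: take a = (t - s)/2 with s^2 = t^2 - 4d. *)
Lemma quadratic_root_split (t d : C) :
  Cnorm (Csub t C1) <= 0.063 -> Cnorm d <= 0.055 ->
  exists a, Cmul a (Csub t a) = d /\ Cnorm a <= 0.138 /\ Cnorm (Csub (Csub t a) C1) <= 0.138.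
Proof.
  intros Ht Hd.
  set (Dl := Csub (Cmul t t) (Cmul (Creal 4) d)).
  assert (HDl : Cnorm (Csub Dl C1) <= 0.35).
  { replace (Csub Dl C1) with (Csub (Cmul (Csub t C1) (Cadd (Csub t C1) (Creal 2))) (Cmul (Creal 4) d))
      by (unfold Dl; cring).
    eapply Rle_trans; [apply Cnorm_sub_le|]. rewrite !Cnorm_mul, Cnorm_real, (Rabs_right 4) by lra.
    pose proof (Cnorm_triangle (Csub t C1) (Creal 2)). rewrite Cnorm_real, Rabs_right in H by lra.
    pose proof (Cnorm_nonneg (Csub t C1)).
    assert (Cnorm (Csub t C1) * Cnorm (Cadd (Csub t C1) (Creal 2)) <= 0.063 * 2.063)
      by (apply Rmult_le_compat; try lra; apply Cnorm_nonneg).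
    lra. }
  destruct (sqrt_near_one Dl HDl) as [s [hs Hs1]].
  set (a := Cmul (Creal (1/2)) (Csub t s)).
  assert (Hhalf : forall z, Cnorm (Cmul (Creal (1/2)) z) = Cnorm z / 2).
  { intro z. rewrite Cnorm_mul, Cnorm_real, Rabs_right by lra. field. }
  exists a. split; [|split].
  - transitivity (Cmul (Creal (1/4)) (Csub (Cmul t t) (Cmul s s))).
    + unfold a. apply Ceq; unfold Creal, Csub, Cadd, Copp, Cmul; simpl; field.
    + rewrite hs. unfold Dl. apply Ceq; unfold Creal, Csub, Cadd, Copp, Cmul; simpl; field.
  - replace a with (Cmul (Creal (1/2)) (Csub (Csub t C1) (Csub s C1))) by (unfold a; cring).
    rewrite Hhalf. pose proof (Cnorm_sub_le (Csub t C1) (Csub s C1)). lra.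
  - replace (Csub (Csub t a) C1) with (Cmul (Creal (1/2)) (Cadd (Csub t C1) (Csub s C1)))
      by (unfold a; apply Ceq; unfold C1, Creal, Csub, Cadd, Copp, Cmul; simpl; field).
    rewrite Hhalf. pose proof (Cnorm_triangle (Csub t C1) (Csub s C1)). lra.
Qed.

Definition line_proj (w1 w2 : C) : M2 :=
  let c := Creal (/ (Cnorm2 w1 + Cnorm2 w2)) in
  mkM2 (Cmul c (Cmul w1 (Cconj w1))) (Cmul c (Cmul w1 (Cconj w2)))
       (Cmul c (Cmul w2 (Cconj w1))) (Cmul c (Cmul w2 (Cconj w2))).

Section LineProjection.
Variables w1 w2 : C.
Hypothesis w_nonzero : 0 < Cnorm2 w1 + Cnorm2 w2.

Let k := Creal (/ (Cnorm2 w1 + Cnorm2 w2)).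

(* The normalisation identities k (|w1|^2 + |w2|^2) = 1, in the two shapes needed below. *)
Let k_norm m : Cmul k (Cadd (Cmul (Cmul w1 (Cconj w1)) m) (Cmul (Cconj w2) (Cmul w2 m))) = m.
Proof.
  unfold k. destruct w1 as [p1 p2], w2 as [p3 p4], m as [q1 q2]. unfold Cnorm2 in *; simpl in *.
  unfold Creal, Cconj, Cmul, Cadd; simpl. apply Ceq; simpl; field; lra.
Qed.
Let k_norm' m : Cmul k (Cadd (Cmul (Cconj w1) (Cmul w1 m)) (Cmul (Cmul w2 (Cconj w2)) m)) = m.
Proof.
  unfold k. destruct w1 as [p1 p2], w2 as [p3 p4], m as [q1 q2]. unfold Cnorm2 in *; simpl in *.
  unfold Creal, Cconj, Cmul, Cadd; simpl. apply Ceq; simpl; field; lra.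
Qed.

Lemma line_proj_idem : Mmul (line_proj w1 w2) (line_proj w1 w2) = line_proj w1 w2.
Proof.
  destruct w1 as [p1 p2], w2 as [p3 p4]. unfold Cnorm2 in *; simpl in *.
  apply M2eq; unfold line_proj, Mmul, Cnorm2, Creal, Cconj, Cmul, Cadd; simpl; apply Ceq; simpl; field; lra.
Qed.

Lemma line_proj_kill M :
  Cadd (Cmul (m11 M) w1) (Cmul (m12 M) w2) = C0 -> Cadd (Cmul (m21 M) w1) (Cmul (m22 M) w2) = C0 ->
  Mmul M (line_proj w1 w2) = M0.
Proof.
  intros e1 e2. destruct M as [a b c d]; simpl in *. fold k.
  apply M2eq; unfold line_proj, Mmul, M0; simpl; fold k.
  - transitivity (Cmul (Cmul k (Cconj w1)) (Cadd (Cmul a w1) (Cmul b w2))); [ring|]. rewrite e1. ring.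
  - transitivity (Cmul (Cmul k (Cconj w2)) (Cadd (Cmul a w1) (Cmul b w2))); [ring|]. rewrite e1. ring.
  - transitivity (Cmul (Cmul k (Cconj w1)) (Cadd (Cmul c w1) (Cmul d w2))); [ring|]. rewrite e2. ring.
  - transitivity (Cmul (Cmul k (Cconj w2)) (Cadd (Cmul c w1) (Cmul d w2))); [ring|]. rewrite e2. ring.
Qed.

Lemma line_proj_fix M :
  Cmul w1 (m21 M) = Cmul w2 (m11 M) -> Cmul w1 (m22 M) = Cmul w2 (m12 M) ->
  Mmul (line_proj w1 w2) M = M.
Proof.
  intros e1 e2. destruct M as [a b c d]; simpl in *.
  apply M2eq; unfold line_proj, Mmul; simpl; fold k.
  - transitivity (Cmul k (Cadd (Cmul (Cmul w1 (Cconj w1)) a) (Cmul (Cconj w2) (Cmul w1 c)))); [ring|].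
    rewrite e1. apply k_norm.
  - transitivity (Cmul k (Cadd (Cmul (Cmul w1 (Cconj w1)) b) (Cmul (Cconj w2) (Cmul w1 d)))); [ring|].
    rewrite e2. apply k_norm.
  - transitivity (Cmul k (Cadd (Cmul (Cconj w1) (Cmul w2 a)) (Cmul (Cmul w2 (Cconj w2)) c))); [ring|].
    rewrite <- e1. apply k_norm'.
  - transitivity (Cmul k (Cadd (Cmul (Cconj w1) (Cmul w2 b)) (Cmul (Cmul w2 (Cconj w2)) d))); [ring|].
    rewrite <- e2. apply k_norm'.
Qed.

(* HS norm of a combination of I and the projection (its eigenvalues are be and be + ga). *)
Lemma line_proj_HS2 be ga :
  HS2 (Madd (Mscale be MI) (Mscale ga (line_proj w1 w2))) = Cnorm2 be + Cnorm2 (Cadd be ga).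
Proof.
  destruct w1 as [p1 p2], w2 as [p3 p4], be as [b1 b2], ga as [g1 g2].
  unfold Cnorm2 in *; simpl in *.
  unfold HS2, Madd, Mscale, MI, line_proj, Cnorm2, Creal, Cconj, Cmul, Cadd, C1, C0; simpl.
  field. lra.
Qed.

End LineProjection.

(* An eigenvector w of A for the eigenvalue l, together with the fact that the columns
   of A - (tr A - l) I are multiples of w (Cayley-Hamilton: (A - l)(A - l') = 0). *)
Inductive eigen_data (A : M2) (l : C) : Prop :=
  EigenData (w1 w2 : C) :
    0 < Cnorm2 w1 + Cnorm2 w2 ->
    Cadd (Cmul (m11 A) w1) (Cmul (m12 A) w2) = Cmul l w1 ->
    Cadd (Cmul (m21 A) w1) (Cmul (m22 A) w2) = Cmul l w2 ->
    Cmul w1 (m21 A) = Cmul w2 (Csub (m11 A) (Csub (tr A) l)) ->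
    Cmul w1 (Csub (m22 A) (Csub (tr A) l)) = Cmul w2 (m12 A) ->
    eigen_data A l.

Lemma get_eigen_data (A : M2) (l : C) :
  det A = Cmul l (Csub (tr A) l) -> Cadd l l <> tr A -> eigen_data A l.
Proof.
  intros h hne. destruct A as [a b c d]. unfold det, tr in *; simpl in *.
  destruct (Rlt_dec 0 (Cnorm2 b + Cnorm2 (Csub l a))) as [hp|hp].
  - apply (EigenData _ _ b (Csub l a)); cbn [m11 m12 m21 m22]; unfold tr; cbn [m11 m12 m21 m22]; auto.
    + ring.
    + transitivity (Cadd (Cmul d l) (Copp (Csub (Cmul a d) (Cmul b c)))); [ring|]. rewrite h. ring.
    + transitivity (Csub (Cmul a d) (Csub (Cmul a d) (Cmul b c))); [ring|]. rewrite h. ring.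
    + ring.
  - destruct (Rlt_dec 0 (Cnorm2 (Csub l d) + Cnorm2 c)) as [hq|hq].
    + apply (EigenData _ _ (Csub l d) c); cbn [m11 m12 m21 m22]; unfold tr; cbn [m11 m12 m21 m22]; auto.
      * transitivity (Cadd (Cmul a l) (Copp (Csub (Cmul a d) (Cmul b c)))); [ring|]. rewrite h. ring.
      * ring.
      * ring.
      * transitivity (Csub (Cmul a d) (Cmul l (Csub (Cadd a d) l))); [ring|]. rewrite <- h. ring.
    + (* otherwise A = l I, and l would be a double root *)
      exfalso. apply hne.
      pose proof (Cnorm2_nonneg b); pose proof (Cnorm2_nonneg (Csub l a));
      pose proof (Cnorm2_nonneg (Csub l d)); pose proof (Cnorm2_nonneg c).
      assert (e1 : Csub l a = C0) by (apply Cnorm2_zero; lra).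
      assert (e2 : Csub l d = C0) by (apply Cnorm2_zero; lra).
      transitivity (Csub (Cadd l l) (Cadd (Csub l a) (Csub l d))); [rewrite e1, e2|]; ring.
Qed.

Lemma eigenvalue_defect (A : M2) (l : C) : eigen_data A l ->
  Cnorm (Csub (Cmul l l) l) <= HS (defect A).
Proof.
  intros [w1 w2 hp r1 r2 _ _].
  set (W := mkM2 w1 C0 w2 C0).
  assert (hAW : Mmul A W = Mscale l W).
  { destruct A; simpl in *. apply M2eq; unfold W, Mmul, Mscale; simpl; try rewrite <- r1; try rewrite <- r2; ring. }
  assert (hDW : Mmul (defect A) W = Mscale (Csub (Cmul l l) l) W).
  { unfold defect. replace (Mmul (Msub (Mmul A A) A) W) with (Msub (Mmul A (Mmul A W)) (Mmul A W)) by mat_ring.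
    rewrite hAW. replace (Mmul A (Mscale l W)) with (Mscale l (Mmul A W)) by mat_ring. rewrite hAW. mat_ring. }
  assert (hW : 0 < HS W).
  { unfold HS, W; simpl. apply sqrt_lt_R0. unfold C0, Cnorm2 at 2 4; simpl. lra. }
  pose proof (HS_mul (defect A) W). rewrite hDW, HS_scale in H.
  apply Rmult_le_reg_r with (HS W); auto.
Qed.

Lemma small_root (x dl : R) : 0 <= x -> 0 <= dl -> dl < 0.03 ->
  x * (1 - x) <= dl -> x <= 0.138 -> x <= 1.12 * dl.
Proof.
  intros hx h0 h1 he hl.
  assert (x * 0.862 <= x * (1 - x)) by (apply Rmult_le_compat_l; lra).
  (* first x <= 0.035, hence 1 - x >= 0.965 *)
  assert (x * 0.965 <= x * (1 - x)) by (apply Rmult_le_compat_l; lra).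
  lra.
Qed.

(* If A has an eigenvalue a, the idempotent P = (I - Q) + Q (A - a I), with Q the projection
   onto the a-eigenvector, satisfies ||A - P||^2 = |a|^2 + |a' - 1|^2, where a' = tr A - a. *)
Lemma idempotent_from_eigenvalue (A : M2) (a : C) : eigen_data A a ->
  exists P, Mmul P P = P /\
    HS (Msub A P) = sqrt (Cnorm2 (Csub (Csub (tr A) a) C1) + Cnorm2 a).
Proof.
  intros [w1 w2 hp r1 r2 c1 c2].
  set (b := Csub (tr A) a).
  set (Q := line_proj w1 w2).
  set (Na := Msub A (Mscale a MI)). set (Nb := Msub A (Mscale b MI)).
  assert (hNQ : Mmul Na Q = M0).
  { apply line_proj_kill; auto.
    - transitivity (Csub (Cadd (Cmul (m11 A) w1) (Cmul (m12 A) w2)) (Cmul a w1)).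
      + unfold Na; destruct A; mat_ring.
      + rewrite r1; ring.
    - transitivity (Csub (Cadd (Cmul (m21 A) w1) (Cmul (m22 A) w2)) (Cmul a w2)).
      + unfold Na; destruct A; mat_ring.
      + rewrite r2; ring. }
  assert (hQQ : Mmul Q Q = Q) by (apply line_proj_idem; auto).
  assert (hfix : Mmul Q Nb = Nb).
  { apply line_proj_fix; auto.
    - transitivity (Cmul w1 (m21 A)); [unfold Nb; destruct A; mat_ring|].
      rewrite c1. fold b. unfold Nb; destruct A; mat_ring.
    - transitivity (Cmul w1 (Csub (m22 A) b)); [unfold Nb; destruct A; mat_ring|].
      unfold b; rewrite c2. unfold Nb; destruct A; mat_ring. }
  exists (Madd (Msub MI Q) (Mmul Q Na)). split.
  - replace (Mmul (Madd (Msub MI Q) (Mmul Q Na)) (Madd (Msub MI Q) (Mmul Q Na))) with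
      (Madd (Madd (Msub MI Q) (Mmul Q Na))
        (Madd (Mmul (Msub (Mmul Q Q) Q) (Msub MI Na)) (Msub (Mmul Q (Mmul (Mmul Na Q) Na)) (Mmul Q (Mmul Na Q)))))
      by mat_ring.
    rewrite hNQ, hQQ. mat_ring.
  - replace (Msub A (Madd (Msub MI Q) (Mmul Q Na))) with
      (Madd (Mscale (Csub b C1) MI) (Mscale (Csub a (Csub b C1)) Q)).
    + change (HS ?X) with (sqrt (HS2 X)). unfold Q. rewrite line_proj_HS2 by auto.
      replace (Cadd (Csub b C1) (Csub a (Csub b C1))) with a by ring. reflexivity.
    + transitivity (Madd (Madd (Mscale (Csub b C1) MI) (Mscale (Csub a (Csub b C1)) Q))
                         (Msub Nb (Mmul Q Nb))).
      * rewrite hfix. mat_ring.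
      * unfold Na, Nb. mat_ring.
Qed.

Lemma eigenvalue_near0 (A : M2) (l : C) (dl : R) : 0 <= dl -> dl < 0.03 -> HS (defect A) <= dl ->
  eigen_data A l -> Cnorm l <= 0.138 -> Cnorm l <= 1.12 * dl.
Proof.
  intros h0 h1 HD E hl. pose proof (eigenvalue_defect A l E).
  replace (Csub (Cmul l l) l) with (Cmul l (Csub l C1)) in H by ring.
  rewrite Cnorm_mul in H. pose proof (Cnorm_sub_C1_ge l). pose proof (Cnorm_nonneg l).
  apply small_root; auto. nra.
Qed.

Lemma eigenvalue_near1 (A : M2) (l : C) (dl : R) : 0 <= dl -> dl < 0.03 -> HS (defect A) <= dl ->
  eigen_data A l -> Cnorm (Csub l C1) <= 0.138 -> Cnorm (Csub l C1) <= 1.12 * dl.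
Proof.
  intros h0 h1 HD E hl. pose proof (eigenvalue_defect A l E).
  replace (Csub (Cmul l l) l) with (Cmul (Csub l C1) l) in H by ring.
  rewrite Cnorm_mul in H. pose proof (Cnorm_nonneg (Csub l C1)).
  pose proof (Cnorm_reverse_triangle C1 (Copp (Csub l C1))). rewrite Cnorm_C1, Cnorm_opp in H1.
  replace (Csub C1 (Copp (Csub l C1))) with l in H1 by ring.
  apply small_root; auto. nra.
Qed.

Lemma eigenvalues_near_0_1 (A : M2) (dl : R) : 0 <= dl -> dl < 0.03 ->
  HS (defect A) <= dl -> Cnorm (Csub (tr A) C1) <= 2.1 * dl ->
  exists a, eigen_data A a /\ eigen_data A (Csub (tr A) a) /\
            Cnorm a <= 0.138 /\ Cnorm (Csub (Csub (tr A) a) C1) <= 0.138.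
Proof.
  intros H0 H1 HD Ht.
  destruct (defect_tr_det_bounds A dl HD) as [Htau _].
  pose proof (defect_trace_eq A) as E.
  set (t := tr A) in *. set (d := det A) in *.
  (* 2 d = t (t - 1) - tr (defect A) is small *)
  assert (Hd : Cnorm d <= 0.055).
  { assert (2 * Cnorm d <= 0.11); [|lra].
    rewrite <- Cnorm_double.
    replace (Cadd d d) with (Csub (Cmul t (Csub t C1)) (tr (defect A))) by (rewrite E; ring).
    eapply Rle_trans; [apply Cnorm_sub_le|]. rewrite Cnorm_mul.
    pose proof (Cnorm_triangle (Csub t C1) C1). replace (Cadd (Csub t C1) C1) with t in H by ring.
    rewrite Cnorm_C1 in H. pose proof (Cnorm_nonneg (Csub t C1)).
    assert (Cnorm t * Cnorm (Csub t C1) <= 1.063 * 0.063) by (apply Rmult_le_compat; try lra; apply Cnorm_nonneg).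
    unfold sqrt2_ub in *; lra. }
  destruct (quadratic_root_split t d ltac:(lra) Hd) as [a [Hdet [Ha Hb]]].
  exists a. split; [|split; [|split]]; auto.
  - apply get_eigen_data; [exact (eq_sym Hdet)|]. intro e. fold t in e.
    pose proof (Cnorm_reverse_triangle C1 t). rewrite Cnorm_C1, Cnorm_sub_sym in H.
    assert (Cnorm t = 2 * Cnorm a) by (rewrite <- e; apply Cnorm_double). lra.
  - set (b := Csub t a) in *. apply get_eigen_data.
    + fold t d. rewrite <- Hdet. unfold b. ring.
    + intro e. fold t in e.
      assert (Csub t C1 = Cadd (Cadd (Csub b C1) (Csub b C1)) C1) by (rewrite <- e; ring).
      pose proof (Cnorm_reverse_triangle C1 (Copp (Cadd (Csub b C1) (Csub b C1)))).
      rewrite Cnorm_C1, Cnorm_opp, Cnorm_double in H2.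
      replace (Csub C1 (Copp (Cadd (Csub b C1) (Csub b C1)))) with (Cadd (Cadd (Csub b C1) (Csub b C1)) C1) in H2 by ring.
      rewrite <- H in H2. lra.
Qed.

Lemma near_idempotent (A : M2) (dl : R) : 0 <= dl -> dl < 0.03 ->
  HS (defect A) <= dl -> Cnorm (Csub (tr A) C1) <= 2.1 * dl ->
  exists P, Mmul P P = P /\ HS (Msub A P) <= 1.59 * dl.
Proof.
  intros H0 H1 HD Ht.
  destruct (eigenvalues_near_0_1 A dl H0 H1 HD Ht) as [a [Ea [Eb [Ha Hb]]]].
  pose proof (eigenvalue_near0 A a dl H0 H1 HD Ea Ha) as Ha2.
  pose proof (eigenvalue_near1 A _ dl H0 H1 HD Eb Hb) as Hb2.
  destruct (idempotent_from_eigenvalue A a Ea) as [P [hP hAP]].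
  exists P. split; auto. rewrite hAP.
  set (b := Csub (tr A) a) in *.
  rewrite <- !Cnorm_sq. apply sqrt_le_sq; [lra|].
  pose proof (Cnorm_nonneg a). pose proof (Cnorm_nonneg (Csub b C1)).
  assert (Cnorm (Csub b C1) * Cnorm (Csub b C1) <= (1.12*dl)*(1.12*dl)) by (apply Rmult_le_compat; lra).
  assert (Cnorm a * Cnorm a <= (1.12*dl)*(1.12*dl)) by (apply Rmult_le_compat; lra).
  nra.
Qed.

(** * The trace type of an approximate idempotent *)

(* The integer 0, 1 or 2 nearest to the trace (the "rank" of the nearby idempotent). *)
Definition trace_type (B : M2) : nat :=
  if Rle_dec (Cnorm (tr B)) 0.4 then 0%nat
  else if Rle_dec (Cnorm (Csub (tr B) (Creal 2))) 0.4 then 2%nat else 1%nat.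

Definition type_value (n : nat) : R := match n with 0%nat => 0 | 1%nat => 1 | _ => 2 end.

Lemma trace_type_cases B : trace_type B = 0%nat \/ trace_type B = 1%nat \/ trace_type B = 2%nat.
Proof. unfold trace_type. destruct Rle_dec; auto. destruct Rle_dec; auto. Qed.

Lemma trace_type_spec B dl : 0 <= dl -> dl < 0.03 -> HS (defect B) <= dl ->
  Cnorm (Csub (tr B) (Creal (type_value (trace_type B)))) <= 2.1 * dl /\
  (trace_type B = 0%nat -> HS B <= 1.12 * dl) /\
  (trace_type B = 2%nat -> HS (Msub MI B) <= 1.12 * dl).
Proof.
  intros H0 H1 H2. pose proof (trace_trichotomy B dl H0 H1 H2).
  unfold trace_type. destruct Rle_dec as [h0|h0].
  - destruct (near0 _ _ H0 H1 H2 h0). simpl type_value. rewrite Cnorm_sub0.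
    repeat split; try lra; discriminate.
  - destruct Rle_dec as [h2|h2].
    + destruct (near2 _ _ H0 H1 H2 h2). simpl type_value. repeat split; try lra; discriminate.
    + assert (Cnorm (Csub (tr B) C1) <= 0.4) by (destruct H as [?|[?|?]]; lra).
      pose proof (near1 _ _ H0 H1 H2 H3). simpl type_value. unfold C1 in *. repeat split; try lra; discriminate.
Qed.

Lemma type1_large B dl : dl < 0.03 -> Cnorm (Csub (tr B) C1) <= 2.1 * dl -> 0.66 <= HS B.
Proof.
  intros h1 h. pose proof (Cnorm_real_sep (tr B) 0 1). rewrite Cnorm_sub0, Rabs_left in H by lra.
  pose proof (Cnorm_tr B). unfold C1, sqrt2_ub in *. lra.
Qed.

Lemma small_defect_small_trace B dl : 0 <= dl -> dl < 0.03 ->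
  HS (defect B) <= 4 * dl -> Cnorm (tr B) <= 4.2 * dl -> HS B <= 5.13 * dl.
Proof.
  intros h0 h1 hD ht.
  assert (dl*dl <= 0.03*dl) by nra. assert (0 <= dl*dl) by nra.
  apply (small_trace_bound _ (4*dl) (4.2*dl) 0.718 (5.13*dl) 1); try lra; unfold sqrt2_ub; nra.
Qed.

Lemma HS_add4 A B D E : HS (Madd (Msub (Msub A B) D) E) <= HS A + HS B + HS D + HS E.
Proof.
  eapply Rle_trans; [apply HS_triangle|].
  pose proof (HS_sub_le (Msub A B) D). pose proof (HS_sub_le A B). lra.
Qed.

Definition split_map (P : M2) (a b : R) : M2 :=
  Madd (Mscale (Creal a) P) (Mscale (Creal b) (Msub MI P)).

Lemma split_map_expand P a b a' b' : Mmul (split_map P a b) (split_map P a' b') =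
  Madd (split_map P (a * a') (b * b')) (Mscale (Creal ((a - b) * (a' - b'))) (defect P)).
Proof.
  destruct P. apply M2eq; unfold split_map, defect, Madd, Msub, Mopp, Mscale, Mmul, MI; simpl; cring.
Qed.

Lemma split_map_mul P a b a' b' : Mmul P P = P ->
  Mmul (split_map P a b) (split_map P a' b') = split_map P (a * a') (b * b').
Proof. intro hP. rewrite split_map_expand. unfold defect. rewrite hP. unfold split_map. mat_ring. Qed.

(* Writing (Y - Z)^2 in terms of X - I, defect Y and the products ZY, YX; used when X
   is near I and Z plays the role of the product of X and Y. *)
Lemma square_diff_identity X Y Z : Mmul (Msub Y Z) (Msub Y Z) =
  Madd (Mopp (Mmul (Madd (Msub Y Z) (Msub (defect Y) (Msub (Mmul Z Y) Z))) (Msub X MI)))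
       (Mmul (Msub Y Z) (Msub (Mmul Y X) Z)).
Proof. unfold defect; mat_ring. Qed.

(** * Approximately multiplicative maps on a semilattice *)

Section Semilattice.

Variables (S : Type) (op : S -> S -> S) (th : S -> M2) (dl : R).
Hypothesis semilattice : is_semilattice S op.
Hypothesis dl_nonneg : 0 <= dl.
Hypothesis dl_small : dl < 0.03.
Hypothesis th_mult : forall e f, HS (Msub (Mmul (th e) (th f)) (th (op e f))) <= dl.

Let op_assoc x y z : op x (op y z) = op (op x y) z.
Proof. apply semilattice. Qed.
Let op_comm x y : op x y = op y x.
Proof. apply semilattice. Qed.
Let op_idem x : op x x = x.
Proof. apply semilattice. Qed.

Let absorb_l x y : op x (op x y) = op x y.
Proof. rewrite op_assoc, op_idem. reflexivity. Qed.
Let absorb_r x y : op y (op x y) = op x y.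
Proof. rewrite (op_comm x y). apply absorb_l. Qed.
Let below_mono y z w : op y z = z -> op (op y w) (op z w) = op z w.
Proof.
  intro hz. rewrite <- op_assoc, (op_comm z w), (op_assoc w w z), op_idem, (op_comm w z), op_assoc, hz.
  reflexivity.
Qed.

Let type x := trace_type (th x).

Lemma th_defect x : HS (defect (th x)) <= dl.
Proof. pose proof (th_mult x x). rewrite op_idem in H. exact H. Qed.

Lemma type_spec x :
  Cnorm (Csub (tr (th x)) (Creal (type_value (type x)))) <= 2.1 * dl /\
  (type x = 0%nat -> HS (th x) <= 1.12 * dl) /\
  (type x = 2%nat -> HS (Msub MI (th x)) <= 1.12 * dl).
Proof. apply trace_type_spec; auto using th_defect. Qed.

Lemma diff_defect x z : op x z = z -> HS (defect (Msub (th x) (th z))) <= 4 * dl.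
Proof.
  intro hz.
  replace (defect (Msub (th x) (th z))) with
    (Madd (Msub (Msub (defect (th x)) (Msub (Mmul (th x) (th z)) (th z)))
                (Msub (Mmul (th z) (th x)) (th z))) (defect (th z))) by (unfold defect; mat_ring).
  eapply Rle_trans; [apply HS_add4|].
  pose proof (th_defect x); pose proof (th_defect z).
  pose proof (th_mult x z). rewrite hz in H1.
  pose proof (th_mult z x). rewrite op_comm, hz in H2. lra.
Qed.

Lemma diff_trace x z :
  Cnorm (Csub (tr (Msub (th x) (th z))) (Creal (type_value (type x) - type_value (type z)))) <= 4.2 * dl.
Proof.
  rewrite tr_sub.
  replace (Csub (Csub (tr (th x)) (tr (th z))) (Creal (type_value (type x) - type_value (type z))))
   with (Csub (Csub (tr (th x)) (Creal (type_value (type x)))) (Csub (tr (th z)) (Creal (type_value (type z)))))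
   by cring.
  destruct (type_spec x) as [h1 _]; destruct (type_spec z) as [h2 _].
  eapply Rle_trans; [apply Cnorm_sub_le|]. lra.
Qed.

Lemma type_mono x z : op x z = z -> (type z <= type x)%nat.
Proof.
  intro hz. pose proof (diff_defect x z hz). pose proof (diff_trace x z).
  destruct (trace_type_cases (th x)) as [e1|[e1|e1]]; destruct (trace_type_cases (th z)) as [e2|[e2|e2]];
    unfold type in *; rewrite ?e1, ?e2 in *; simpl type_value in *; try lia; exfalso;
    eapply no_negative_trace; eauto; lra.
Qed.

Lemma same_type_close x z : op x z = z -> type x = type z -> HS (Msub (th x) (th z)) <= 5.13 * dl.
Proof.
  intros hz he. pose proof (diff_trace x z).
  rewrite he, Rminus_diag, Cnorm_sub0 in H.
  apply small_defect_small_trace; auto using diff_defect.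
Qed.

Lemma close_product_not_type0 u v (kappa : R) :
  type u = 1%nat -> HS (Msub (th u) (th v)) <= kappa -> kappa <= 0.7 -> type (op u v) <> 0%nat.
Proof.
  intros eu hk hk1 e0.
  destruct (type_spec u) as [hu _]. rewrite eu in hu.
  pose proof (type1_large (th u) dl dl_small hu) as hbig.
  destruct (type_spec (op u v)) as [_ [h0 _]]. specialize (h0 e0).
  pose proof (th_mult u v). pose proof (th_defect u).
  assert (HS (th u) <= dl + 1.12*dl + HS (th u) * kappa + dl).
  { assert (E : th u = Msub (Madd (Msub (Mmul (th u) (th v)) (th (op u v))) (th (op u v)))
                    (Madd (Mmul (th u) (Msub (th v) (th u))) (defect (th u)))) by (unfold defect; mat_ring).
    rewrite E at 1.
    eapply Rle_trans; [apply HS_sub_le|].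
    eapply Rle_trans; [apply Rplus_le_compat; apply HS_triangle|].
    pose proof (HS_mul (th u) (Msub (th v) (th u))). rewrite HS_sub_sym in H1.
    pose proof (HS_nonneg (th u)). nra. }
  nra.
Qed.

Lemma type2_product_close x y : type x = 2%nat -> HS (Msub (th y) (th (op x y))) <= 0.131.
Proof.
  intro ex. destruct (type_spec x) as [_ [_ hE]]. specialize (hE ex). rewrite HS_sub_sym in hE.
  assert (hyz : op y (op x y) = op x y) by apply absorb_r.
  pose proof (diff_defect y (op x y) hyz) as hB.
  set (B := Msub (th y) (th (op x y))) in *.
  pose proof (th_defect y) as hDy.
  pose proof (th_mult (op x y) y) as hE1. rewrite (op_comm (op x y) y), hyz in hE1.
  pose proof (th_mult y x) as hE2. rewrite (op_comm y x) in hE2.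
  (* B^2 is a product of small factors *)
  assert (HB2 : HS (Mmul B B) <= (HS B + dl + dl) * (1.12*dl) + HS B * dl).
  { unfold B. rewrite square_diff_identity with (X := th x). fold B.
    eapply Rle_trans; [apply HS_triangle|]. rewrite HS_opp.
    apply Rplus_le_compat.
    - eapply Rle_trans; [apply HS_mul|]. apply Rmult_le_compat; try apply HS_nonneg; auto.
      eapply Rle_trans; [apply HS_triangle|].
      pose proof (HS_sub_le (defect (th y)) (Msub (Mmul (th (op x y)) (th y)) (th (op x y)))). lra.
    - eapply Rle_trans; [apply HS_mul|]. apply Rmult_le_compat_l; auto. apply HS_nonneg. }
  (* hence B = B^2 - defect B is small *)
  pose proof (HS_sub_le (Mmul B B) (defect B)).
  replace (Msub (Mmul B B) (defect B)) with B in H by (unfold defect; mat_ring).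
  assert (HS B * (1 - 2.12*dl) <= 4*dl + 2.24*dl*dl) by nra.
  pose proof (HS_nonneg B).
  assert (HS B * 0.9364 <= HS B * (1 - 2.12*dl)) by (apply Rmult_le_compat_l; lra).
  assert (dl * dl <= 0.03 * dl) by nra. lra.
Qed.

Lemma type2_neutral x y : type x = 2%nat -> type (op x y) = type y.
Proof.
  intro ex. pose proof (type2_product_close x y ex) as hB.
  pose proof (diff_trace y (op x y)) as htr.
  set (B := Msub (th y) (th (op x y))) in *.
  pose proof (Cnorm_tr B).
  pose proof (Cnorm_real_sep (tr B) 0 (type_value (type y) - type_value (type (op x y)))).
  rewrite Cnorm_sub0 in H0.
  destruct (trace_type_cases (th y)) as [e1|[e1|e1]]; destruct (trace_type_cases (th (op x y))) as [e2|[e2|e2]];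
    unfold type in *; rewrite ?e1, ?e2 in *; simpl type_value in *; try reflexivity; exfalso;
    unfold sqrt2_ub in *; unfold Rabs in H0; destruct Rcase_abs in H0; lra.
Qed.

(** Given a class function c (which will separate the
    type-1 elements into two groups), chi1 and chi2 are the coefficients of theta(x) on the
    idempotents P and I - P respectively. *)

Definition chi1 (c : S -> nat) (x : S) : R :=
  match type x with 0%nat => 0 | 1%nat => if Nat.eqb (c x) 1 then 1 else 0 | _ => 1 end.
Definition chi2 (c : S -> nat) (x : S) : R :=
  match type x with 0%nat => 0 | 1%nat => if Nat.eqb (c x) 1 then 0 else 1 | _ => 1 end.

Lemma chi_01 c x : (chi1 c x = 0 \/ chi1 c x = 1) /\ (chi2 c x = 0 \/ chi2 c x = 1).
Proof. unfold chi1, chi2. destruct (type x) as [|[|]]; try destruct (Nat.eqb (c x) 1); auto. Qed.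

Lemma chi_mul c :
  (forall x, type x = 1%nat -> (c x <= 1)%nat) ->
  (forall x y, type x = 1%nat -> type y = 1%nat -> c x = c y -> type (op x y) = 1%nat /\ c (op x y) = c x) ->
  (forall x y, type x = 1%nat -> type y = 1%nat -> c x <> c y -> type (op x y) = 0%nat) ->
  (forall x y, type x = 2%nat -> type y = 1%nat -> c (op x y) = c y) ->
  forall x y, chi1 c (op x y) = chi1 c x * chi1 c y /\ chi2 c (op x y) = chi2 c x * chi2 c y.
Proof.
  intros hc h11 hdiff h2 x y. unfold chi1, chi2.
  pose proof (type_mono x (op x y) (absorb_l x y)).
  pose proof (type_mono y (op x y) (absorb_r x y)).
  destruct (trace_type_cases (th x)) as [ex|[ex|ex]]; fold (type x) in ex.
  - assert (type (op x y) = 0%nat) by lia. rewrite ex, H1. split; ring.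
  - destruct (trace_type_cases (th y)) as [ey|[ey|ey]]; fold (type y) in ey.
    + assert (type (op x y) = 0%nat) by lia. rewrite ey, H1. destruct (Nat.eqb (c x) 1); split; ring.
    + pose proof (hc x ex); pose proof (hc y ey). rewrite ex, ey.
      destruct (Nat.eq_dec (c x) (c y)) as [e|ne].
      * destruct (h11 x y ex ey e) as [e1 e2]. rewrite e1, e2, e.
        destruct (Nat.eqb (c y) 1); split; ring.
      * rewrite (hdiff x y ex ey ne).
        destruct (c x) as [|[|]]; destruct (c y) as [|[|]]; try lia; simpl; split; ring.
    + rewrite (op_comm x y), (type2_neutral y x ey), ex, ey, (h2 y x ey ex).
      destruct (Nat.eqb (c x) 1); split; ring.
  - rewrite (type2_neutral x y ex), ex.
    destruct (trace_type_cases (th y)) as [ey|[ey|ey]]; fold (type y) in ey; rewrite ey; try (split; ring).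
    rewrite (h2 x y ex ey). destruct (Nat.eqb (c y) 1); split; ring.
Qed.

Lemma approx_off_type1 P c x : type x <> 1%nat ->
  HS (Msub (th x) (split_map P (chi1 c x) (chi2 c x))) <= 1.12 * dl.
Proof.
  intro hx. destruct (type_spec x) as [_ [h0 h2]]. unfold chi1, chi2, split_map.
  destruct (trace_type_cases (th x)) as [e|[e|e]]; fold (type x) in e; rewrite e in *.
  - replace (Msub (th x) (Madd (Mscale (Creal 0) P) (Mscale (Creal 0) (Msub MI P)))) with (th x) by mat_ring.
    auto.
  - congruence.
  - rewrite HS_sub_sym.
    replace (Madd (Mscale (Creal 1) P) (Mscale (Creal 1) (Msub MI P))) with MI by mat_ring. auto.
Qed.

(** Fix a reference element x0 of type 1.  The class of a type-1 element x is the type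
    of x x0: class 1 means theta(x) is near theta(x0), class 0 means theta(x) is near
    I - theta(x0). *)

Section Reference.

Variable x0 : S.
Hypothesis x0_type : type x0 = 1%nat.

Definition class x : nat := type (op x x0).

Lemma class_le1 x : (class x <= 1)%nat.
Proof. unfold class. rewrite <- x0_type. apply type_mono, absorb_r. Qed.

Lemma class_below y z : op y z = z -> type y = 1%nat -> type z = 1%nat -> class z = class y.
Proof.
  intros hz ey ez.
  pose proof (type_mono (op y x0) (op z x0) (below_mono y z x0 hz)).
  pose proof (class_le1 y). pose proof (class_le1 z). unfold class in *.
  destruct (Nat.eq_dec (type (op z x0)) (type (op y x0))) as [|hne]; auto. exfalso.
  assert (ew : type (op y x0) = 1%nat) by lia. assert (ez0 : type (op z x0) = 0%nat) by lia.
  pose proof (same_type_close y z hz ltac:(congruence)).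
  pose proof (same_type_close y (op y x0) (absorb_l y x0) ltac:(congruence)).
  assert (hclose : HS (Msub (th z) (th (op y x0))) <= 10.26 * dl).
  { eapply Rle_trans; [apply (HS_sub_triangle _ (th y))|]. rewrite HS_sub_sym. lra. }
  apply (close_product_not_type0 z (op y x0) (10.26*dl) ez hclose ltac:(lra)).
  replace (op z (op y x0)) with (op z x0); auto.
  rewrite op_assoc, (op_comm z y), hz. reflexivity.
Qed.

Lemma class1_close x : type x = 1%nat -> class x = 1%nat -> HS (Msub (th x) (th x0)) <= 10.26 * dl.
Proof.
  intros ex ec. unfold class in ec.
  pose proof (same_type_close x (op x x0) (absorb_l x x0) ltac:(congruence)).
  pose proof (same_type_close x0 (op x x0) (absorb_r x x0) ltac:(congruence)).
  eapply Rle_trans; [apply (HS_sub_triangle _ (th (op x x0)))|]. rewrite (HS_sub_sym _ (th x0)). lra.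
Qed.

(* For class 0, theta(x) + theta(x0) is an approximate idempotent of trace near 2. *)
Lemma class0_close x : type x = 1%nat -> class x = 0%nat ->
  HS (Msub (Madd (th x) (th x0)) MI) <= 8.6 * dl.
Proof.
  intros ex ec. unfold class in ec.
  destruct (type_spec (op x x0)) as [_ [h0 _]]. specialize (h0 ec).
  set (Cm := Madd (th x) (th x0)).
  assert (HC : HS (defect Cm) <= 6.24 * dl).
  { replace (defect Cm) with (Madd (Madd (defect (th x)) (defect (th x0)))
                                   (Madd (Mmul (th x) (th x0)) (Mmul (th x0) (th x))))
      by (unfold Cm, defect; mat_ring).
    pose proof (th_defect x). pose proof (th_defect x0).
    pose proof (th_mult x x0). pose proof (th_mult x0 x). rewrite (op_comm x0 x) in H2.
    pose proof (HS_triangle (Msub (Mmul (th x) (th x0)) (th (op x x0))) (th (op x x0))).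
    pose proof (HS_triangle (Msub (Mmul (th x0) (th x)) (th (op x x0))) (th (op x x0))).
    replace (Madd (Msub (Mmul (th x) (th x0)) (th (op x x0))) (th (op x x0))) with (Mmul (th x) (th x0)) in H3 by mat_ring.
    replace (Madd (Msub (Mmul (th x0) (th x)) (th (op x x0))) (th (op x x0))) with (Mmul (th x0) (th x)) in H4 by mat_ring.
    eapply Rle_trans; [apply HS_triangle|]. eapply Rle_trans; [apply Rplus_le_compat; apply HS_triangle|].
    lra. }
  rewrite <- defect_compl in HC.
  assert (Ht : Cnorm (tr (Msub MI Cm)) <= 4.2 * dl).
  { destruct (type_spec x) as [h1 _]; destruct (type_spec x0) as [h2 _].
    unfold type in *. rewrite ex in h1; rewrite x0_type in h2. simpl type_value in *.
    unfold Cm. rewrite tr_sub, tr_add, tr_MI.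
    replace (Csub (Creal 2) (Cadd (tr (th x)) (tr (th x0)))) with
      (Copp (Cadd (Csub (tr (th x)) (Creal 1)) (Csub (tr (th x0)) (Creal 1)))) by cring.
    rewrite Cnorm_opp. eapply Rle_trans; [apply Cnorm_triangle|]. lra. }
  assert (dl*dl <= 0.03*dl) by nra. assert (0 <= dl*dl) by nra.
  rewrite HS_sub_sym.
  apply (small_trace_bound _ (6.24*dl) (4.2*dl) 0.67 (8.6*dl) 1); try lra; unfold sqrt2_ub; nra.
Qed.

Lemma same_class_product x y : type x = 1%nat -> type y = 1%nat -> class x = class y ->
  type (op x y) = 1%nat /\ class (op x y) = class x.
Proof.
  intros ex ey ec.
  assert (hxy : HS (Msub (th x) (th y)) <= 0.7).
  { pose proof (class_le1 x).
    destruct (class x) as [|[|]] eqn:E; try lia.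
    - pose proof (class0_close x ex E). pose proof (class0_close y ey ltac:(congruence)).
      replace (Msub (th x) (th y)) with
        (Msub (Msub (Madd (th x) (th x0)) MI) (Msub (Madd (th y) (th x0)) MI)) by mat_ring.
      eapply Rle_trans; [apply HS_sub_le|]. lra.
    - pose proof (class1_close x ex E). pose proof (class1_close y ey ltac:(congruence)).
      eapply Rle_trans; [apply (HS_sub_triangle _ (th x0))|]. rewrite (HS_sub_sym (th x0)). lra. }
  pose proof (close_product_not_type0 x y 0.7 ex hxy ltac:(lra)).
  pose proof (type_mono x (op x y) (absorb_l x y)).
  assert (exy : type (op x y) = 1%nat) by lia.
  split; auto. apply class_below; auto.
Qed.

Lemma diff_class_product x y : type x = 1%nat -> type y = 1%nat -> class x <> class y ->
  type (op x y) = 0%nat.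
Proof.
  intros ex ey ne.
  pose proof (type_mono x (op x y) (absorb_l x y)).
  destruct (Nat.eq_dec (type (op x y)) 0%nat) as [|n0]; auto.
  assert (exy : type (op x y) = 1%nat) by lia.
  pose proof (class_below x (op x y) (absorb_l x y) ex exy).
  pose proof (class_below y (op x y) (absorb_r x y) ey exy). congruence.
Qed.

Lemma type2_class x y : type x = 2%nat -> type y = 1%nat -> class (op x y) = class y.
Proof.
  intros ex ey. pose proof (type2_neutral x y ex). rewrite ey in H.
  apply class_below; auto.
Qed.

Lemma approx_type1 P : HS (Msub (th x0) P) <= 1.59 * dl ->
  forall x, type x = 1%nat -> HS (Msub (th x) (split_map P (chi1 class x) (chi2 class x))) <= 12 * dl.
Proof.
  intros hP x e. unfold chi1, chi2. rewrite e.
  pose proof (class_le1 x).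
  destruct (class x) as [|[|]] eqn:E; try lia; simpl.
  - pose proof (class0_close x e E).
    replace (Msub (th x) (split_map P 0 1)) with (Msub (Msub (Madd (th x) (th x0)) MI) (Msub (th x0) P))
      by (unfold split_map; mat_ring).
    eapply Rle_trans; [apply HS_sub_le|]. lra.
  - pose proof (class1_close x e E).
    replace (split_map P 1 0) with P by (unfold split_map; mat_ring).
    eapply Rle_trans; [apply (HS_sub_triangle _ (th x0))|]. lra.
Qed.

End Reference.

Theorem character_approximation :
  exists P (c1 c2 : S -> R), Mmul P P = P /\
    (forall x, (c1 x = 0 \/ c1 x = 1) /\ (c2 x = 0 \/ c2 x = 1)) /\
    (forall x y, c1 (op x y) = c1 x * c1 y /\ c2 (op x y) = c2 x * c2 y) /\
    (forall x, HS (Msub (th x) (split_map P (c1 x) (c2 x))) <= 12 * dl).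
Proof.
  destruct (classic (exists x0, type x0 = 1%nat)) as [[x0 e0]|hno].
  - destruct (type_spec x0) as [htr _]. rewrite e0 in htr.
    destruct (near_idempotent (th x0) dl dl_nonneg dl_small (th_defect x0) htr) as [P [hP hPd]].
    exists P, (chi1 (class x0)), (chi2 (class x0)). split; [auto|split; [|split]].
    + apply chi_01.
    + apply chi_mul.
      * intros; apply (class_le1 x0); auto.
      * intros; apply (same_class_product x0); auto.
      * intros; apply (diff_class_product x0); auto.
      * intros; apply (type2_class x0); auto.
    + intro x. destruct (Nat.eq_dec (type x) 1) as [e|ne].
      * apply approx_type1; auto.
      * pose proof (approx_off_type1 P (class x0) x ne). lra.
  - assert (hno' : forall x, type x <> 1%nat) by (intros x e; apply hno; eauto).
    exists M0, (chi1 (fun _ => 0%nat)), (chi2 (fun _ => 0%nat)). split; [mat_ring|split; [|split]].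
    + apply chi_01.
    + apply chi_mul; intros; exfalso; eapply hno'; eauto.
    + intro x. pose proof (approx_off_type1 M0 (fun _ => 0%nat) x (hno' x)). lra.
Qed.

End Semilattice.

(** * Finite sums over lists *)

Definition deq {I : Type} (x y : I) : {x = y} + {x <> y} := excluded_middle_informative (x = y).

Section ListSums.
Context {I : Type}.
Implicit Types (f g : I -> R) (u v : I -> C) (l : list I).

Lemma rsum_app f l1 l2 : rsum_list f (l1 ++ l2) = rsum_list f l1 + rsum_list f l2.
Proof. induction l1; simpl; [ring | rewrite IHl1; ring]. Qed.
Lemma csum_app u l1 l2 : csum_list u (l1 ++ l2) = Cadd (csum_list u l1) (csum_list u l2).
Proof. induction l1; simpl; [cring | rewrite IHl1; ring]. Qed.
Lemma rsum_perm f l1 l2 : Permutation l1 l2 -> rsum_list f l1 = rsum_list f l2.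
Proof. induction 1; simpl; lra. Qed.
Lemma csum_perm u l1 l2 : Permutation l1 l2 -> csum_list u l1 = csum_list u l2.
Proof. induction 1; simpl; try congruence. ring. Qed.
Lemma rsum_ext f g l : (forall i, In i l -> f i = g i) -> rsum_list f l = rsum_list g l.
Proof. induction l; simpl; intros; auto. rewrite H, IHl; auto. Qed.
Lemma csum_ext u v l : (forall i, In i l -> u i = v i) -> csum_list u l = csum_list v l.
Proof. induction l; simpl; intros; auto. rewrite H, IHl; auto. Qed.
Lemma rsum_le f g l : (forall i, In i l -> f i <= g i) -> rsum_list f l <= rsum_list g l.
Proof. induction l; simpl; intros; [lra|]. pose proof (H a (or_introl eq_refl)).
  assert (rsum_list f l <= rsum_list g l) by (apply IHl; auto). lra. Qed.
Lemma rsum_nonneg f l : (forall i, 0 <= f i) -> 0 <= rsum_list f l.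
Proof. intro H. induction l; simpl; [lra|]. specialize (H a). lra. Qed.
Lemma rsum_scale (c : R) f l : rsum_list (fun i => c * f i) l = c * rsum_list f l.
Proof. induction l; simpl; [ring | rewrite IHl; ring]. Qed.
Lemma rsum_add f g l : rsum_list (fun i => f i + g i) l = rsum_list f l + rsum_list g l.
Proof. induction l; simpl; [ring | rewrite IHl; ring]. Qed.
Lemma rsum_const (c : R) l : rsum_list (fun _ => c) l = INR (length l) * c.
Proof. induction l; simpl length; simpl rsum_list; [simpl; ring|]. rewrite IHl, S_INR. ring. Qed.
Lemma csum_add u v l : csum_list (fun i => Cadd (u i) (v i)) l = Cadd (csum_list u l) (csum_list v l).
Proof. induction l; simpl; [cring | rewrite IHl; ring]. Qed.
Lemma csum_sub u v l : csum_list (fun i => Csub (u i) (v i)) l = Csub (csum_list u l) (csum_list v l).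
Proof. induction l; simpl; [cring | rewrite IHl; ring]. Qed.
Lemma csum_scale (c : C) u l : csum_list (fun i => Cmul c (u i)) l = Cmul c (csum_list u l).
Proof. induction l; simpl; [cring | rewrite IHl; ring]. Qed.
Lemma csum_zero u l : (forall i, In i l -> u i = C0) -> csum_list u l = C0.
Proof. induction l; simpl; intros; auto. rewrite H, IHl; auto. cring. Qed.
Lemma rsum_zero f l : (forall i, In i l -> f i = 0) -> rsum_list f l = 0.
Proof. induction l; simpl; intros; auto. rewrite H, IHl; auto. ring. Qed.
Lemma csum_norm u l : Cnorm (csum_list u l) <= rsum_list (fun i => Cnorm (u i)) l.
Proof. induction l; simpl; [rewrite Cnorm_C0; lra|]. eapply Rle_trans; [apply Cnorm_triangle|]. lra. Qed.
Lemma csum_parts u l :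
  csum_list u l = (rsum_list (fun i => fst (u i)) l, rsum_list (fun i => snd (u i)) l).
Proof. induction l; simpl; [reflexivity|]. rewrite IHl. reflexivity. Qed.
Lemma rsum_filter_zero f (p : I -> bool) l :
  (forall i, In i l -> p i = false -> f i = 0) -> rsum_list f l = rsum_list f (filter p l).
Proof.
  induction l; simpl; intros h; auto. destruct (p a) eqn:E; simpl.
  - rewrite IHl; auto.
  - rewrite (h a), IHl; auto. ring.
Qed.

Definition ldiff l l0 : list I := filter (fun x => if in_dec deq x l0 then false else true) l.
Definition lunion l1 l2 : list I := nodup deq (l1 ++ l2).

Lemma ldiff_In l l0 x : In x (ldiff l l0) <-> In x l /\ ~ In x l0.
Proof. unfold ldiff. rewrite filter_In. destruct (in_dec deq x l0); intuition congruence. Qed.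
Lemma ldiff_NoDup l l0 : NoDup l -> NoDup (ldiff l l0).
Proof. intros; apply NoDup_filter; auto. Qed.
Lemma lunion_NoDup l1 l2 : NoDup (lunion l1 l2).
Proof. apply NoDup_nodup. Qed.
Lemma lunion_l l1 l2 : incl l1 (lunion l1 l2).
Proof. intros x hx. apply nodup_In, in_app_iff; auto. Qed.
Lemma lunion_r l1 l2 : incl l2 (lunion l1 l2).
Proof. intros x hx. apply nodup_In, in_app_iff; auto. Qed.

Lemma split_incl l0 l : NoDup l0 -> NoDup l -> incl l0 l -> Permutation l (l0 ++ ldiff l l0).
Proof.
  intros h0 h hi. apply NoDup_Permutation; auto.
  - apply NoDup_app; auto using ldiff_NoDup. intros a ha hb. apply ldiff_In in hb. tauto.
  - intro x. rewrite in_app_iff, ldiff_In. split.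
    + intro hx. destruct (in_dec deq x l0); tauto.
    + intros [hx|[hx _]]; auto.
Qed.

Lemma rsum_incl f l0 l : NoDup l0 -> NoDup l -> incl l0 l -> (forall i, 0 <= f i) ->
  rsum_list f l0 <= rsum_list f l.
Proof.
  intros h0 h hi hf. rewrite (rsum_perm f _ _ (split_incl l0 l h0 h hi)), rsum_app.
  pose proof (rsum_nonneg f (ldiff l l0) hf). lra.
Qed.

End ListSums.

(* g has bounded finite sums, and the supremum of its finite sums.  For g = |f| these are
   exactly is_l1 f and l1norm f. *)
Definition bnd {I} (g : I -> R) : Prop := exists B, forall l, NoDup l -> rsum_list g l <= B.
Definition Ssup {I} (g : I -> R) : R :=
  epsilon (inhabits 0) (fun L => is_lub (fun r => exists l, NoDup l /\ r = rsum_list g l) L).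

Section Suprema.
Context {I : Type}.
Implicit Types (g : I -> R).

Lemma Ssup_lub g : bnd g -> is_lub (fun r => exists l, NoDup l /\ r = rsum_list g l) (Ssup g).
Proof.
  intros [B hB]. unfold Ssup. apply epsilon_spec.
  destruct (completeness (fun r => exists l, NoDup l /\ r = rsum_list g l)) as [L hL].
  - exists B. intros r [l [hl ->]]. auto.
  - exists 0, []. split; [constructor | reflexivity].
  - exists L; auto.
Qed.
Lemma Ssup_ge g l : bnd g -> NoDup l -> rsum_list g l <= Ssup g.
Proof. intros hb hl. destruct (Ssup_lub g hb) as [h _]. apply h. exists l; auto. Qed.
Lemma Ssup_le g B : bnd g -> (forall l, NoDup l -> rsum_list g l <= B) -> Ssup g <= B.
Proof. intros hb hB. destruct (Ssup_lub g hb) as [_ h]. apply h. intros r [l [hl ->]]. auto. Qed.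
Lemma Ssup_nonneg g : bnd g -> 0 <= Ssup g.
Proof. intros hb. apply (Ssup_ge g [] hb). constructor. Qed.
Lemma Ssup_approx g eps : bnd g -> 0 < eps -> exists l, NoDup l /\ Ssup g - eps < rsum_list g l.
Proof.
  intros hb he. apply NNPP. intro h.
  assert (Ssup g <= Ssup g - eps); [|lra].
  apply Ssup_le; auto. intros l hl. apply Rnot_lt_le. intro hlt. apply h. eauto.
Qed.
Lemma bnd_le (f g : I -> R) : bnd g -> (forall i, f i <= g i) -> bnd f.
Proof. intros [B hB] h. exists B. intros l hl. eapply Rle_trans; [apply rsum_le|]; eauto. Qed.

Lemma small_tail g eta : bnd g -> (forall i, 0 <= g i) -> 0 < eta ->
  exists l0, NoDup l0 /\ forall m, incl l0 m -> NoDup m ->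
    forall l, NoDup l -> (forall x, In x l -> ~ In x m) -> rsum_list g l <= eta.
Proof.
  intros hb hg he. destruct (Ssup_approx g eta hb he) as [l0 [hl0 h0]].
  exists l0. split; auto. intros m hm hmd l hl hd.
  assert (NoDup (m ++ l)) by (apply NoDup_app; auto; intros a ha hb'; apply (hd a hb' ha)).
  pose proof (Ssup_ge g (m ++ l) hb H). rewrite rsum_app in H0.
  pose proof (rsum_incl g l0 m hl0 hmd hm hg). lra.
Qed.

End Suprema.

(** * Unconditional sums *)

Definition rhas_sum {I} (g : I -> R) (L : R) : Prop :=
  forall eps, 0 < eps -> exists l0, NoDup l0 /\
    forall l, NoDup l -> incl l0 l -> Rabs (rsum_list g l - L) < eps.

Definition csummable {I} (f : I -> C) : Prop := bnd (fun i => Cnorm (f i)).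

Section UnconditionalSums.
Context {I : Type}.
Implicit Types (f g : I -> C).

(* Absolutely summable real families are unconditionally summable (split into the
   positive and negative parts). *)
Lemma rhas_sum_exists (g : I -> R) : bnd (fun i => Rabs (g i)) -> exists L, rhas_sum g L.
Proof.
  intro hb.
  set (gp := fun i => Rmax (g i) 0). set (gm := fun i => Rmax (- g i) 0).
  assert (hp : bnd gp) by (apply (bnd_le _ _ hb); intro i; unfold gp, Rmax, Rabs; destruct Rle_dec; destruct Rcase_abs; lra).
  assert (hm : bnd gm) by (apply (bnd_le _ _ hb); intro i; unfold gm, Rmax, Rabs; destruct Rle_dec; destruct Rcase_abs; lra).
  assert (hp0 : forall i, 0 <= gp i) by (intro i; unfold gp, Rmax; destruct Rle_dec; lra).
  assert (hm0 : forall i, 0 <= gm i) by (intro i; unfold gm, Rmax; destruct Rle_dec; lra).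
  assert (hg : forall l, rsum_list g l = rsum_list gp l - rsum_list gm l).
  { intro l. rewrite <- (rsum_ext (fun i => gp i - gm i)).
    - induction l; simpl; [ring|rewrite IHl; ring].
    - intros i _. unfold gp, gm, Rmax. destruct Rle_dec; destruct Rle_dec; lra. }
  exists (Ssup gp - Ssup gm). intros eps he.
  destruct (Ssup_approx gp (eps/3) hp ltac:(lra)) as [l1 [hl1 h1]].
  destruct (Ssup_approx gm (eps/3) hm ltac:(lra)) as [l2 [hl2 h2]].
  exists (lunion l1 l2). split; [apply lunion_NoDup|]. intros l hl hi.
  pose proof (rsum_incl gp l1 l hl1 hl (fun x hx => hi x (lunion_l l1 l2 x hx)) hp0).
  pose proof (rsum_incl gm l2 l hl2 hl (fun x hx => hi x (lunion_r l1 l2 x hx)) hm0).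
  pose proof (Ssup_ge gp l hp hl). pose proof (Ssup_ge gm l hm hl).
  rewrite hg. unfold Rabs; destruct Rcase_abs; lra.
Qed.

Lemma has_sum_exists f : csummable f -> exists L, has_sum f L.
Proof.
  intro hb.
  destruct (rhas_sum_exists (fun i => fst (f i))) as [Lr hr].
  { apply (bnd_le _ _ hb). intro i. apply Cnorm_re_im. }
  destruct (rhas_sum_exists (fun i => snd (f i))) as [Li hi].
  { apply (bnd_le _ _ hb). intro i. apply Cnorm_re_im. }
  exists (Lr, Li). intros eps he.
  destruct (hr (eps/2) ltac:(lra)) as [l1 [hl1 h1]]. destruct (hi (eps/2) ltac:(lra)) as [l2 [hl2 h2]].
  exists (lunion l1 l2). split; [apply lunion_NoDup|]. intros l hl hinc.
  specialize (h1 l hl (fun x hx => hinc x (lunion_l l1 l2 x hx))).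
  specialize (h2 l hl (fun x hx => hinc x (lunion_r l1 l2 x hx))).
  eapply Rle_lt_trans; [apply Cnorm_le_re_im|]. rewrite csum_parts.
  unfold Csub, Cadd, Copp; simpl. unfold Rminus in h1, h2. lra.
Qed.

Lemma has_sum_unique f A B : has_sum f A -> has_sum f B -> A = B.
Proof.
  intros hA hB.
  assert (H : forall eps, 0 < eps -> Cnorm (Csub A B) < eps).
  { intros eps he. destruct (hA (eps/2) ltac:(lra)) as [l1 [hl1 h1]].
    destruct (hB (eps/2) ltac:(lra)) as [l2 [hl2 h2]].
    set (l := lunion l1 l2).
    specialize (h1 l (lunion_NoDup _ _) (lunion_l _ _)). specialize (h2 l (lunion_NoDup _ _) (lunion_r _ _)).
    replace (Csub A B) with (Csub (Csub (csum_list f l) B) (Csub (csum_list f l) A)) by ring.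
    eapply Rle_lt_trans; [apply Cnorm_sub_le|]. lra. }
  destruct (Req_dec (Cnorm (Csub A B)) 0) as [e|ne].
  - apply Cnorm_eq0 in e. transitivity (Cadd (Csub A B) B); [ring|]. rewrite e. ring.
  - pose proof (Cnorm_nonneg (Csub A B)). specialize (H (Cnorm (Csub A B)) ltac:(lra)). lra.
Qed.

Lemma usum_eq f A : has_sum f A -> usum f = A.
Proof. intro h. unfold usum. apply (has_sum_unique f); [apply epsilon_spec; eauto | auto]. Qed.
Lemma usum_spec f : csummable f -> has_sum f (usum f).
Proof. intro h. destruct (has_sum_exists f h) as [L hL]. rewrite (usum_eq f L hL). auto. Qed.

Lemma has_sum_add f g A B : has_sum f A -> has_sum g B -> has_sum (fun i => Cadd (f i) (g i)) (Cadd A B).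
Proof.
  intros hA hB eps he. destruct (hA (eps/2) ltac:(lra)) as [l1 [hl1 h1]].
  destruct (hB (eps/2) ltac:(lra)) as [l2 [hl2 h2]].
  exists (lunion l1 l2). split; [apply lunion_NoDup|]. intros l hl hinc.
  specialize (h1 l hl (fun x hx => hinc x (lunion_l l1 l2 x hx))).
  specialize (h2 l hl (fun x hx => hinc x (lunion_r l1 l2 x hx))).
  rewrite csum_add. replace (Csub (Cadd (csum_list f l) (csum_list g l)) (Cadd A B))
    with (Cadd (Csub (csum_list f l) A) (Csub (csum_list g l) B)) by ring.
  eapply Rle_lt_trans; [apply Cnorm_triangle|]. lra.
Qed.

Lemma has_sum_scale (c : C) f A : has_sum f A -> has_sum (fun i => Cmul c (f i)) (Cmul c A).
Proof.
  intros hA eps he. pose proof (Cnorm_nonneg c).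
  destruct (hA (eps/(Cnorm c + 1))) as [l1 [hl1 h1]]; [apply Rdiv_lt_0_compat; lra|].
  exists l1. split; auto. intros l hl hinc. specialize (h1 l hl hinc).
  rewrite csum_scale. replace (Csub (Cmul c (csum_list f l)) (Cmul c A)) with (Cmul c (Csub (csum_list f l) A)) by ring.
  rewrite Cnorm_mul. pose proof (Cnorm_nonneg (Csub (csum_list f l) A)).
  apply Rmult_lt_compat_r with (r := Cnorm c + 1) in h1; [|lra].
  unfold Rdiv in h1. rewrite Rmult_assoc, Rinv_l in h1 by lra. nra.
Qed.

Lemma has_sum_finite f l0 : NoDup l0 -> (forall i, ~ In i l0 -> f i = C0) -> has_sum f (csum_list f l0).
Proof.
  intros h0 hz eps he. exists l0. split; auto. intros l hl hinc.
  rewrite (csum_perm f _ _ (split_incl l0 l h0 hl hinc)), csum_app.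
  rewrite (csum_zero f (ldiff l l0)).
  - replace (Csub (Cadd (csum_list f l0) C0) (csum_list f l0)) with C0 by ring. rewrite Cnorm_C0; auto.
  - intros i hi. apply hz. apply ldiff_In in hi. tauto.
Qed.

Lemma usum_bound f : csummable f -> Cnorm (usum f) <= Ssup (fun i => Cnorm (f i)).
Proof.
  intro h. apply Rnot_lt_le. intro hlt.
  set (e := Cnorm (usum f) - Ssup (fun i => Cnorm (f i))).
  destruct (usum_spec f h e ltac:(unfold e; lra)) as [l0 [hl0 h0]]. specialize (h0 l0 hl0 (incl_refl _)).
  pose proof (csum_norm f l0). pose proof (Ssup_ge _ l0 h hl0).
  pose proof (Cnorm_reverse_triangle (usum f) (csum_list f l0)). unfold e in *.
  rewrite Cnorm_sub_sym in h0. lra.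
Qed.

Lemma summable_approx f eta : csummable f -> 0 < eta -> exists l0, NoDup l0 /\
  (forall l, NoDup l -> incl l0 l -> Cnorm (Csub (csum_list f l) (usum f)) < eta) /\
  (forall l, NoDup l -> (forall x, In x l -> ~ In x l0) -> rsum_list (fun i => Cnorm (f i)) l <= eta).
Proof.
  intros hf he.
  destruct (small_tail (fun i => Cnorm (f i)) eta hf (fun _ => Cnorm_nonneg _) he) as [lt [hlt tail]].
  destruct (usum_spec f hf eta he) as [ls [hls close]].
  exists (lunion ls lt). split; [apply lunion_NoDup|]. split.
  - intros l hl hinc. apply close; auto. intros x hx. apply hinc, lunion_l; auto.
  - apply tail; [apply lunion_r | apply lunion_NoDup].
Qed.

End UnconditionalSums.

(** * Sums over products and over fibres *)

Section Products.
Context {X Y : Type}.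

Lemma NoDup_prod (l1 : list X) (l2 : list Y) : NoDup l1 -> NoDup l2 -> NoDup (list_prod l1 l2).
Proof.
  intros h1 h2. induction h1; simpl; [constructor|].
  apply NoDup_app; auto.
  - apply FinFun.Injective_map_NoDup; auto. intros y y' e. inversion e. auto.
  - intros [p q] hp hq. apply in_map_iff in hp. destruct hp as [y [e _]]. inversion e; subst.
    apply in_prod_iff in hq. tauto.
Qed.

Lemma rsum_map {A B} (g : B -> R) (h : A -> B) l : rsum_list g (map h l) = rsum_list (fun x => g (h x)) l.
Proof. induction l; simpl; auto. rewrite IHl; auto. Qed.
Lemma csum_map {A B} (g : B -> C) (h : A -> B) l : csum_list g (map h l) = csum_list (fun x => g (h x)) l.
Proof. induction l; simpl; auto. rewrite IHl; auto. Qed.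

Lemma rsum_prod (g1 : X -> R) (g2 : Y -> R) l1 l2 :
  rsum_list (fun p => g1 (fst p) * g2 (snd p)) (list_prod l1 l2) = rsum_list g1 l1 * rsum_list g2 l2.
Proof. induction l1; simpl; [ring|]. rewrite rsum_app, IHl1, rsum_map. simpl. rewrite rsum_scale. ring. Qed.
Lemma csum_prod (g1 : X -> C) (g2 : Y -> C) l1 l2 :
  csum_list (fun p => Cmul (g1 (fst p)) (g2 (snd p))) (list_prod l1 l2) = Cmul (csum_list g1 l1) (csum_list g2 l2).
Proof. induction l1; simpl; [cring|]. rewrite csum_app, IHl1, csum_map. simpl. rewrite csum_scale. ring. Qed.

Lemma prod_bound (a : X -> R) (b : Y -> R) (l : list (X * Y)) :
  (forall x, 0 <= a x) -> (forall y, 0 <= b y) -> NoDup l ->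
  rsum_list (fun p => a (fst p) * b (snd p)) l <=
  rsum_list a (nodup deq (map fst l)) * rsum_list b (nodup deq (map snd l)).
Proof.
  intros ha hb hl. rewrite <- rsum_prod. apply rsum_incl; auto.
  - apply NoDup_prod; apply NoDup_nodup.
  - intros [x y] hp. apply in_prod; apply nodup_In; apply in_map_iff; exists (x,y); auto.
  - intro p. apply Rmult_le_pos; auto.
Qed.

Variables (a : X -> C) (b : Y -> C).
Hypotheses (ha : csummable a) (hb : csummable b).

Let Ba := Ssup (fun x => Cnorm (a x)).
Let Bb := Ssup (fun y => Cnorm (b y)).
Let F := fun p : X * Y => Cmul (a (fst p)) (b (snd p)).

Let F_bound l : NoDup l -> rsum_list (fun p => Cnorm (F p)) l <=
  rsum_list (fun x => Cnorm (a x)) (nodup deq (map fst l)) * rsum_list (fun y => Cnorm (b y)) (nodup deq (map snd l)).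
Proof.
  intro hl. rewrite (rsum_ext _ (fun p => Cnorm (a (fst p)) * Cnorm (b (snd p)))).
  - apply (prod_bound (fun x => Cnorm (a x)) (fun y => Cnorm (b y))); auto; intros; apply Cnorm_nonneg.
  - intros; apply Cnorm_mul.
Qed.

Lemma prod_summable : csummable F.
Proof.
  exists (Ba * Bb). intros l hl. eapply Rle_trans; [apply F_bound; auto|].
  apply Rmult_le_compat; try (apply rsum_nonneg; intros; apply Cnorm_nonneg);
    apply Ssup_ge; auto; apply NoDup_nodup.
Qed.

Lemma prod_remainder (X0 : list X) (Y0 : list Y) (eta : R) :
  (forall l, NoDup l -> (forall x, In x l -> ~ In x X0) -> rsum_list (fun x => Cnorm (a x)) l <= eta) ->
  (forall l, NoDup l -> (forall y, In y l -> ~ In y Y0) -> rsum_list (fun y => Cnorm (b y)) l <= eta) ->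
  forall r, NoDup r -> (forall p, In p r -> ~ In p (list_prod X0 Y0)) ->
  rsum_list (fun p => Cnorm (F p)) r <= eta * Bb + Ba * eta.
Proof.
  intros tailX tailY r hr hout.
  pose proof (Ssup_nonneg _ ha). pose proof (Ssup_nonneg _ hb).
  set (inX := fun p : X * Y => if in_dec deq (fst p) X0 then true else false).
  set (r1 := filter (fun p => negb (inX p)) r). set (r2 := filter inX r).
  assert (hperm : Permutation r (r1 ++ r2)).
  { apply NoDup_Permutation; auto.
    - apply NoDup_app; try apply NoDup_filter; auto. intros p hp1 hp2. unfold r1, r2 in *.
      apply filter_In in hp1; apply filter_In in hp2. destruct (inX p); simpl in *; intuition congruence.
    - intro p. rewrite in_app_iff. unfold r1, r2. rewrite !filter_In.
      destruct (inX p); simpl; intuition congruence. }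
  assert (h1 : rsum_list (fun p => Cnorm (F p)) r1 <= eta * Bb).
  { eapply Rle_trans; [apply F_bound, NoDup_filter; auto|].
    apply Rmult_le_compat; try (apply rsum_nonneg; intros; apply Cnorm_nonneg).
    - apply tailX; [apply NoDup_nodup|]. intros x hx. rewrite nodup_In, in_map_iff in hx.
      destruct hx as [p [<- hp]]. unfold r1, inX in hp. apply filter_In in hp.
      destruct (in_dec deq (fst p) X0); simpl in hp; intuition congruence.
    - apply Ssup_ge; auto. apply NoDup_nodup. }
  assert (h2 : rsum_list (fun p => Cnorm (F p)) r2 <= Ba * eta).
  { eapply Rle_trans; [apply F_bound, NoDup_filter; auto|].
    apply Rmult_le_compat; try (apply rsum_nonneg; intros; apply Cnorm_nonneg).
    - apply Ssup_ge; auto. apply NoDup_nodup.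
    - apply tailY; [apply NoDup_nodup|]. intros y hy hy0. rewrite nodup_In, in_map_iff in hy.
      destruct hy as [p [<- hp]]. unfold r2, inX in hp. apply filter_In in hp. destruct hp as [hp hp'].
      destruct (in_dec deq (fst p) X0) as [hx|]; try congruence.
      apply (hout p hp). destruct p; apply in_prod; auto. }
  rewrite (rsum_perm _ _ _ hperm), rsum_app. lra.
Qed.

Lemma has_sum_prod : has_sum F (Cmul (usum a) (usum b)).
Proof.
  intros eps he.
  pose proof (Ssup_nonneg _ ha) as hBa. pose proof (Ssup_nonneg _ hb) as hBb. fold Ba Bb in hBa, hBb.
  set (eta := eps / (4 * (Ba + Bb + 2))).
  assert (het : 0 < eta) by (unfold eta; apply Rdiv_lt_0_compat; lra).
  assert (het2 : eta * (4 * (Ba + Bb + 2)) = eps) by (unfold eta; field; lra).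
  destruct (summable_approx a eta ha het) as [X0 [hX0 [sa tailX]]].
  destruct (summable_approx b eta hb het) as [Y0 [hY0 [sb tailY]]].
  specialize (sa X0 hX0 (incl_refl _)). specialize (sb Y0 hY0 (incl_refl _)).
  exists (list_prod X0 Y0). split; [apply NoDup_prod; auto|].
  intros l hl hinc.
  rewrite (csum_perm F _ _ (split_incl _ l (NoDup_prod _ _ hX0 hY0) hl hinc)), csum_app.
  unfold F at 1. rewrite csum_prod.
  set (r := ldiff l (list_prod X0 Y0)).
  assert (hrr : Cnorm (csum_list F r) <= eta * Bb + Ba * eta).
  { eapply Rle_trans; [apply csum_norm|]. apply (prod_remainder X0 Y0); auto.
    - apply ldiff_NoDup; auto.
    - intros p hp. apply ldiff_In in hp. tauto. }
  set (sA := csum_list a X0) in *. set (sB := csum_list b Y0) in *.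
  assert (hsB : Cnorm sB <= Bb) by (eapply Rle_trans; [apply csum_norm | apply Ssup_ge; auto]).
  replace (Csub (Cadd (Cmul sA sB) (csum_list F r)) (Cmul (usum a) (usum b)))
    with (Cadd (Cadd (Cmul (Csub sA (usum a)) sB) (Cmul (usum a) (Csub sB (usum b)))) (csum_list F r)) by ring.
  eapply Rle_lt_trans; [apply Cnorm_triangle|].
  eapply Rle_lt_trans; [apply Rplus_le_compat_r, Cnorm_triangle|].
  rewrite !Cnorm_mul.
  pose proof (usum_bound a ha). fold Ba in H.
  pose proof (Cnorm_nonneg (Csub sA (usum a))). pose proof (Cnorm_nonneg sB). pose proof (Cnorm_nonneg (usum a)).
  pose proof (Cnorm_nonneg (Csub sB (usum b))).
  assert (Cnorm (Csub sA (usum a)) * Cnorm sB <= eta * Bb) by (apply Rmult_le_compat; lra).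
  assert (Cnorm (usum a) * Cnorm (Csub sB (usum b)) <= Ba * eta) by (apply Rmult_le_compat; lra).
  nra.
Qed.

End Products.

Section Fibres.
Context {I S : Type}.
Variables (pi : I -> S) (F : I -> C).
Hypothesis hF : csummable F.

Definition fib (s : S) : I -> C := fun i => if excluded_middle_informative (pi i = s) then F i else C0.

Lemma csum_swap {A B} (G : A -> B -> C) (l1 : list A) (l2 : list B) :
  csum_list (fun a => csum_list (G a) l2) l1 = csum_list (fun b => csum_list (fun a => G a b) l1) l2.
Proof.
  induction l1; simpl.
  - rewrite csum_zero; auto.
  - rewrite IHl1. clear IHl1. induction l2; simpl; [cring|]. rewrite <- IHl2. ring.
Qed.

Lemma csum_indicator (x : S) (v : C) (L : list S) : NoDup L -> In x L ->
  csum_list (fun s => if excluded_middle_informative (x = s) then v else C0) L = v.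
Proof.
  induction 1; simpl; intros hin; [contradiction|].
  destruct (excluded_middle_informative (x = x0)) as [e|ne].
  - subst. rewrite csum_zero; [ring|]. intros i hi. destruct excluded_middle_informative; subst; tauto.
  - destruct hin as [e|hin]; [subst; contradiction|]. rewrite IHNoDup; auto. ring.
Qed.

Lemma regroup (L : list S) (l0 : list I) : NoDup L -> (forall i, In i l0 -> In (pi i) L) ->
  csum_list (fun s => csum_list (fib s) l0) L = csum_list F l0.
Proof.
  intros hL hin. unfold fib. rewrite csum_swap. apply csum_ext. intros i hi.
  transitivity (csum_list (fun s => if excluded_middle_informative (pi i = s) then F i else C0) L).
  - apply csum_ext. intros s _. destruct (excluded_middle_informative (pi i = s)); reflexivity.
  - apply csum_indicator; auto.
Qed.

Lemma rsum_fib s l : rsum_list (fun i => Cnorm (fib s i)) l =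
  rsum_list (fun i => Cnorm (F i)) (filter (fun i => if excluded_middle_informative (pi i = s) then true else false) l).
Proof.
  induction l; simpl; auto. unfold fib at 1.
  destruct excluded_middle_informative; simpl; rewrite IHl; auto. rewrite Cnorm_C0. ring.
Qed.

Lemma csummable_fib s : csummable (fib s).
Proof.
  apply (bnd_le _ (fun i => Cnorm (F i))); auto. intro i. unfold fib.
  destruct excluded_middle_informative; [lra|]. rewrite Cnorm_C0. apply Cnorm_nonneg.
Qed.

Lemma fibre_remainder s l0 eta : NoDup l0 -> 0 < eta -> exists r, NoDup r /\
  (forall i, In i r -> pi i = s /\ ~ In i l0) /\
  Cnorm (Csub (usum (fib s)) (csum_list (fib s) l0)) <= eta + rsum_list (fun i => Cnorm (F i)) r.
Proof.
  intros hl0 he.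
  destruct (usum_spec _ (csummable_fib s) eta he) as [m [hm hclose]].
  set (ls := lunion l0 m).
  set (r := filter (fun i => if excluded_middle_informative (pi i = s) then true else false) (ldiff ls l0)).
  exists r. split; [|split].
  - apply NoDup_filter, ldiff_NoDup, lunion_NoDup.
  - intros i hi. unfold r in hi. apply filter_In in hi. destruct hi as [hi hp].
    apply ldiff_In in hi. destruct excluded_middle_informative; [tauto | discriminate].
  - specialize (hclose ls (lunion_NoDup _ _) (lunion_r _ _)).
    rewrite (csum_perm _ _ _ (split_incl l0 ls hl0 (lunion_NoDup _ _) (lunion_l _ _))), csum_app in hclose.
    replace (Csub (usum (fib s)) (csum_list (fib s) l0)) with
      (Cadd (Copp (Csub (Cadd (csum_list (fib s) l0) (csum_list (fib s) (ldiff ls l0))) (usum (fib s))))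
            (csum_list (fib s) (ldiff ls l0))) by ring.
    eapply Rle_trans; [apply Cnorm_triangle|]. rewrite Cnorm_opp.
    pose proof (csum_norm (fib s) (ldiff ls l0)). rewrite rsum_fib in H. unfold r. lra.
Qed.

Lemma rsum_flat_map (g : I -> R) (h : S -> list I) (L : list S) :
  rsum_list g (flat_map h L) = rsum_list (fun s => rsum_list g (h s)) L.
Proof. induction L; simpl; auto. rewrite rsum_app, IHL; auto. Qed.

Lemma NoDup_flat_map_fibres (h : S -> list I) (L : list S) :
  NoDup L -> (forall s, NoDup (h s)) -> (forall s i, In i (h s) -> pi i = s) -> NoDup (flat_map h L).
Proof.
  induction 1; simpl; intros hn hp; [constructor|].
  apply NoDup_app; auto. intros i hi hi2. apply in_flat_map in hi2. destruct hi2 as [s [hs hi2]].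
  apply hp in hi. apply hp in hi2. subst. congruence.
Qed.

Lemma fiber_sum : has_sum (fun s => usum (fib s)) (usum F).
Proof.
  intros eps he.
  destruct (summable_approx F (eps/4) hF ltac:(lra)) as [l0 [hl0 [hclose tail]]].
  specialize (hclose l0 hl0 (incl_refl _)).
  exists (nodup deq (map pi l0)). split; [apply NoDup_nodup|].
  intros L hL hinc.
  set (eta := eps / (4 * (INR (length L) + 1))).
  assert (hn : 0 <= INR (length L)) by apply pos_INR.
  assert (het : 0 < eta) by (unfold eta; apply Rdiv_lt_0_compat; lra).
  assert (hetn : INR (length L) * eta < eps / 4).
  { apply Rmult_lt_reg_r with (4 * (INR (length L) + 1)); [lra|].
    unfold eta. field_simplify; lra. }
  assert (hrs : forall s, {r : list I | NoDup r /\ (forall i, In i r -> pi i = s /\ ~ In i l0) /\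
     Cnorm (Csub (usum (fib s)) (csum_list (fib s) l0)) <= eta + rsum_list (fun i => Cnorm (F i)) r}).
  { intro s. apply constructive_indefinite_description, fibre_remainder; auto. }
  set (rs := fun s => proj1_sig (hrs s)).
  assert (hrs_nd : NoDup (flat_map rs L)).
  { apply NoDup_flat_map_fibres; auto.
    - intro s. apply (proj2_sig (hrs s)).
    - intros s i hi. apply (proj2_sig (hrs s)), hi. }
  assert (hrs_out : forall x, In x (flat_map rs L) -> ~ In x l0).
  { intros x hx. apply in_flat_map in hx. destruct hx as [s [_ hx]].
    destruct (proj2_sig (hrs s)) as [_ [hin _]]. apply (hin x hx). }
  pose proof (tail _ hrs_nd hrs_out) as htail. rewrite rsum_flat_map in htail.
  assert (hreg : csum_list (fun s => csum_list (fib s) l0) L = csum_list F l0).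
  { apply regroup; auto. intros i hi. apply hinc. apply nodup_In. apply in_map; auto. }
  replace (Csub (csum_list (fun s => usum (fib s)) L) (usum F)) with
    (Cadd (csum_list (fun s => Csub (usum (fib s)) (csum_list (fib s) l0)) L)
          (Csub (csum_list F l0) (usum F))) by (rewrite csum_sub, hreg; ring).
  eapply Rle_lt_trans; [apply Cnorm_triangle|].
  eapply Rle_lt_trans; [apply Rplus_le_compat_r, csum_norm|].
  eapply Rle_lt_trans; [apply Rplus_le_compat_r, (rsum_le _ (fun s => eta + rsum_list (fun i => Cnorm (F i)) (rs s)))|].
  - intros s _. destruct (proj2_sig (hrs s)) as [_ [_ h]]. exact h.
  - rewrite rsum_add, rsum_const. lra.
Qed.

End Fibres.

(** * All norms on M2 are equivalent to the Hilbert-Schmidt norm *)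

Section NormEquivalence.
Variable N : M2 -> R.
Hypothesis hN : is_norm_M2 N.

Lemma N_nonneg A : 0 <= N A.
Proof. apply hN. Qed.
Lemma N_zero A : N A = 0 -> A = M0.
Proof. apply hN. Qed.
Lemma N_triangle A B : N (Madd A B) <= N A + N B.
Proof. apply hN. Qed.
Lemma N_scale c A : N (Mscale c A) = Cnorm c * N A.
Proof. apply hN. Qed.

Lemma N_sub_sym A B : N (Msub A B) = N (Msub B A).
Proof.
  replace (Msub A B) with (Mscale (-1,0) (Msub B A)) by mat_ring.
  rewrite N_scale, Cm1, Cnorm_opp, Cnorm_C1. ring.
Qed.
Lemma N_sub_triangle A B D : N (Msub A D) <= N (Msub A B) + N (Msub B D).
Proof. replace (Msub A D) with (Madd (Msub A B) (Msub B D)) by mat_ring. apply N_triangle. Qed.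
Lemma N_M0 : N M0 = 0.
Proof. replace M0 with (Mscale C0 M0) by mat_ring. rewrite N_scale, Cnorm_C0. ring. Qed.

(* N <= L HS: expand A on the matrix units. *)
Lemma N_upper : exists L, 0 < L /\ forall A, N A <= L * HS A.
Proof.
  set (E11 := mkM2 C1 C0 C0 C0). set (E12 := mkM2 C0 C1 C0 C0).
  set (E21 := mkM2 C0 C0 C1 C0). set (E22 := mkM2 C0 C0 C0 C1).
  exists (N E11 + N E12 + N E21 + N E22 + 1).
  pose proof (N_nonneg E11); pose proof (N_nonneg E12); pose proof (N_nonneg E21); pose proof (N_nonneg E22).
  split; [lra|]. intro A.
  replace A with (Madd (Madd (Madd (Mscale (m11 A) E11) (Mscale (m12 A) E12)) (Mscale (m21 A) E21))
                       (Mscale (m22 A) E22)) at 1 by (unfold E11, E12, E21, E22; mat_ring).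
  eapply Rle_trans; [apply N_triangle|]. eapply Rle_trans; [apply Rplus_le_compat_r, N_triangle|].
  eapply Rle_trans; [apply Rplus_le_compat_r, Rplus_le_compat_r, N_triangle|].
  rewrite !N_scale. destruct (Cnorm_entry_le A) as [h1 [h2 [h3 h4]]].
  pose proof (HS_nonneg A).
  assert (Cnorm (m11 A) * N E11 <= HS A * N E11) by (apply Rmult_le_compat_r; auto).
  assert (Cnorm (m12 A) * N E12 <= HS A * N E12) by (apply Rmult_le_compat_r; auto).
  assert (Cnorm (m21 A) * N E21 <= HS A * N E21) by (apply Rmult_le_compat_r; auto).
  assert (Cnorm (m22 A) * N E22 <= HS A * N E22) by (apply Rmult_le_compat_r; auto).
  nra.
Qed.

(* M2 as R^8, to use compactness of the cube [-1,1]^8. *)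
Definition t2m (t : Tn 8 R) : M2 :=
  match t with (a,(b,(c,(d,(e,(f,(g,(h,_)))))))) => mkM2 (a,b) (c,d) (e,f) (g,h) end.
Definition m2t (A : M2) : Tn 8 R :=
  (fst (m11 A), (snd (m11 A), (fst (m12 A), (snd (m12 A),
  (fst (m21 A), (snd (m21 A), (fst (m22 A), (snd (m22 A), tt)))))))).
Lemma t2m_m2t A : t2m (m2t A) = A.
Proof. destruct A as [[] [] [] []]; reflexivity. Qed.

Definition cube_lo : Tn 8 R := (-1,(-1,(-1,(-1,(-1,(-1,(-1,(-1,tt)))))))).
Definition cube_hi : Tn 8 R := (1,(1,(1,(1,(1,(1,(1,(1,tt)))))))).

Lemma m2t_cube A : HS A <= 1 -> bounded_n 8 cube_lo cube_hi (m2t A).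
Proof.
  intro h. destruct (Cnorm_entry_le A) as [h1 [h2 [h3 h4]]].
  destruct (Cnorm_re_im (m11 A)); destruct (Cnorm_re_im (m12 A));
  destruct (Cnorm_re_im (m21 A)); destruct (Cnorm_re_im (m22 A)).
  assert (abs_le1 : forall x, Rabs x <= 1 -> -1 <= x /\ x <= 1) by (intro x; unfold Rabs; destruct Rcase_abs; lra).
  unfold m2t, cube_lo, cube_hi; simpl. repeat split; apply abs_le1; lra.
Qed.

(* Coordinatewise eps-closeness gives HS-closeness 3 eps (3 > sqrt 8). *)
Lemma close_HS e x t : close_n 8 e x t -> HS (Msub (t2m x) (t2m t)) <= 3 * e.
Proof.
  destruct x as [x1 [x2 [x3 [x4 [x5 [x6 [x7 [x8 []]]]]]]]].
  destruct t as [t1 [t2 [t3 [t4 [t5 [t6 [t7 [t8 []]]]]]]]].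
  simpl. intros [h1 [h2 [h3 [h4 [h5 [h6 [h7 [h8 _]]]]]]]].
  assert (he : 0 <= e) by (pose proof (Rabs_pos (x1 - t1)); lra).
  unfold HS, Msub, Madd, Mopp, Mscale, Cnorm2, Cmul, Cadd; simpl.
  apply sqrt_le_sq; [lra|].
  assert (sq : forall u, Rabs u < e -> u * u <= e * e).
  { intros u hu. pose proof (Rsqr_abs u). unfold Rsqr in H. rewrite H. pose proof (Rabs_pos u). nra. }
  pose proof (sq _ h1); pose proof (sq _ h2); pose proof (sq _ h3); pose proof (sq _ h4);
  pose proof (sq _ h5); pose proof (sq _ h6); pose proof (sq _ h7); pose proof (sq _ h8).
  unfold Rminus in *. nra.
Qed.

Lemma fold_min_le (l : list R) x : In x l -> fold_right Rmin 1 l <= x.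
Proof.
  induction l; simpl; intros ht; [contradiction|].
  destruct ht as [<-|ht]; [apply Rmin_l|]. eapply Rle_trans; [apply Rmin_r | auto].
Qed.

(* N is bounded below on the HS unit sphere: cover the cube by finitely many balls on
   which N stays away from 0 (N is continuous by N_upper). *)
Lemma N_unit_sphere : exists m, 0 < m /\ forall A, HS A = 1 -> m <= N A.
Proof.
  destruct N_upper as [L [hL hLA]].
  assert (h6L : 0 < 6 * L) by lra. assert (h8 : 0 < 1/8) by lra.
  set (radius := fun t : Tn 8 R =>
     match Rlt_dec 0 (N (t2m t)) with
     | left h => mkposreal (N (t2m t) / (6 * L)) (Rdiv_lt_0_compat _ _ h h6L)
     | right _ => mkposreal (1/8) h8 end).
  destruct (NNPP _ (compactness_list 8 cube_lo cube_hi radius)) as [l hl].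
  set (g := fun t : Tn 8 R => match Rlt_dec 0 (N (t2m t)) with left _ => N (t2m t) / 2 | right _ => 1 end).
  set (m := fold_right Rmin 1 (map g l)).
  assert (hg : forall t, 0 < g t) by (intro t; unfold g; destruct Rlt_dec; lra).
  exists m. split.
  - unfold m. clear hl. induction l; simpl; [lra|]. apply Rmin_pos; auto.
  - intros A hA. destruct (hl (m2t A) (m2t_cube A ltac:(lra))) as [t [ht [_ hc]]].
    pose proof (close_HS _ _ _ hc) as hcl. rewrite t2m_m2t in hcl.
    assert (hmt : m <= g t) by (apply fold_min_le, in_map; auto).
    unfold g, radius in *. destruct Rlt_dec as [hp|hp]; simpl in hcl.
    + pose proof (N_sub_triangle (t2m t) A M0).
      replace (Msub (t2m t) M0) with (t2m t) in H by mat_ring. replace (Msub A M0) with A in H by mat_ring.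
      pose proof (hLA (Msub (t2m t) A)). rewrite HS_sub_sym in H0.
      assert (L * HS (Msub A (t2m t)) <= N (t2m t) / 2).
      { assert (L * HS (Msub A (t2m t)) <= L * (3 * (N (t2m t) / (6 * L)))) by (apply Rmult_le_compat_l; lra).
        replace (L * (3 * (N (t2m t) / (6 * L)))) with (N (t2m t) / 2) in H1 by (field; lra). lra. }
      lra.
    + assert (N (t2m t) = 0) by (pose proof (N_nonneg (t2m t)); lra).
      apply N_zero in H. rewrite H in hcl.
      replace (Msub A M0) with A in hcl by mat_ring. lra.
Qed.

Lemma N_lower : exists c, 0 < c /\ forall A, HS A <= c * N A.
Proof.
  destruct N_unit_sphere as [m [hm hunit]].
  exists (1/m). split; [apply Rdiv_lt_0_compat; lra|].
  intro A. pose proof (HS_nonneg A). pose proof (N_nonneg A).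
  destruct (Req_dec (HS A) 0) as [e|ne].
  - rewrite e. apply Rmult_le_pos; auto. left; apply Rdiv_lt_0_compat; lra.
  - set (h := HS A) in *.
    assert (hi : 0 < / h) by (apply Rinv_0_lt_compat; lra).
    specialize (hunit (Mscale (Creal (/ h)) A)).
    rewrite N_scale, Cnorm_real, Rabs_right in hunit by lra.
    rewrite HS_scale, Cnorm_real, Rabs_right in hunit by lra. fold h in hunit.
    specialize (hunit ltac:(field; lra)).
    apply Rmult_le_reg_l with m; auto. replace (m * (1 / m * N A)) with (N A) by (field; lra).
    apply Rmult_le_reg_l with (/ h); auto. replace (/ h * (m * h)) with m by (field; lra). lra.
Qed.

End NormEquivalence.

(** * Characters of l^1(S) *)

Section L1.
Context {S : Type}.

Lemma l1norm_Ssup (f : S -> C) : l1norm f = Ssup (fun s => Cnorm (f s)).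
Proof. reflexivity. Qed.

Lemma l1norm_nonneg (f : S -> C) : is_l1 f -> 0 <= l1norm f.
Proof. apply Ssup_nonneg. Qed.

Lemma finite_bound (g : S -> C) m l : NoDup m -> NoDup l -> (forall s, ~ In s m -> g s = C0) ->
  rsum_list (fun s => Cnorm (g s)) l <= rsum_list (fun s => Cnorm (g s)) m.
Proof.
  intros hm hl hz.
  rewrite (rsum_filter_zero _ (fun x => if in_dec deq x m then true else false)).
  - apply rsum_incl; auto using NoDup_filter.
    + intros x hx. apply filter_In in hx. destruct in_dec; intuition congruence.
    + intros; apply Cnorm_nonneg.
  - intros i _ hp. destruct in_dec; try congruence. rewrite hz; auto. apply Cnorm_C0.
Qed.

Lemma finite_l1 (g : S -> C) m : NoDup m -> (forall s, ~ In s m -> g s = C0) -> is_l1 g.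
Proof. intros hm hz. exists (rsum_list (fun s => Cnorm (g s)) m). intros l hl. apply finite_bound; auto. Qed.

Definition point_mass (s : S) : S -> C := fun x => if excluded_middle_informative (x = s) then C1 else C0.

Lemma point_mass_outside s x : ~ In x [s] -> point_mass s x = C0.
Proof. intro hx. unfold point_mass. destruct excluded_middle_informative; auto. subst; exfalso; apply hx; left; auto. Qed.

Lemma point_mass_l1 (s : S) : is_l1 (point_mass s).
Proof. apply (finite_l1 _ [s]); [repeat constructor; auto | apply point_mass_outside]. Qed.

Lemma point_mass_norm (s : S) : l1norm (point_mass s) = 1.
Proof.
  assert (hs : NoDup [s]) by (repeat constructor; auto).
  assert (e1 : rsum_list (fun x => Cnorm (point_mass s x)) [s] = 1).
  { simpl. unfold point_mass. destruct excluded_middle_informative; try congruence. rewrite Cnorm_C1. lra. }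
  rewrite l1norm_Ssup. apply Rle_antisym.
  - apply Ssup_le; [apply point_mass_l1|]. intros l hl. rewrite <- e1. apply finite_bound; auto. apply point_mass_outside.
  - rewrite <- e1. apply Ssup_ge; auto. apply point_mass_l1.
Qed.

Lemma conv_point_mass (op : S -> S -> S) (x y : S) : conv op (point_mass x) (point_mass y) = point_mass (op x y).
Proof.
  apply functional_extensionality. intro s. unfold conv.
  set (F := fun p : S * S => if excluded_middle_informative (op (fst p) (snd p) = s)
                             then Cmul (point_mass x (fst p)) (point_mass y (snd p)) else C0).
  assert (hz : forall p, ~ In p [(x,y)] -> F p = C0).
  { intros [p q] hp. unfold F, point_mass; simpl. destruct excluded_middle_informative; auto.
    destruct (excluded_middle_informative (p = x)); destruct (excluded_middle_informative (q = y)); subst;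
      try (exfalso; apply hp; left; reflexivity); cring. }
  rewrite (usum_eq _ _ (has_sum_finite F [(x,y)] ltac:(repeat constructor; auto) hz)).
  simpl. unfold F, point_mass; simpl.
  destruct (excluded_middle_informative (x = x)); try congruence.
  destruct (excluded_middle_informative (y = y)); try congruence.
  destruct (excluded_middle_informative (op x y = s)); destruct (excluded_middle_informative (s = op x y));
    subst; try congruence; cring.
Qed.

(** A {0,1}-valued semicharacter chi of S extends to the character f |-> sum_s f(s) chi(s)
    of l^1(S). *)

Definition weighted (f : S -> C) (chi : S -> R) : S -> C := fun s => Cmul (f s) (Creal (chi s)).

Variable chi : S -> R.
Hypothesis chi_01 : forall x, chi x = 0 \/ chi x = 1.

Lemma weighted_le f s : Cnorm (weighted f chi s) <= Cnorm (f s).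
Proof.
  unfold weighted. rewrite Cnorm_mul, Cnorm_real. pose proof (Cnorm_nonneg (f s)).
  destruct (chi_01 s) as [-> | ->]; rewrite ?Rabs_R0, ?Rabs_R1; lra.
Qed.

Lemma weighted_summable f : is_l1 f -> csummable (weighted f chi).
Proof. intro hf. apply (bnd_le _ (fun s => Cnorm (f s))); auto. apply weighted_le. Qed.

Lemma weighted_sum_add f g : is_l1 f -> is_l1 g ->
  usum (weighted (fadd f g) chi) = Cadd (usum (weighted f chi)) (usum (weighted g chi)).
Proof.
  intros hf hg. apply usum_eq.
  replace (weighted (fadd f g) chi) with (fun s => Cadd (weighted f chi s) (weighted g chi s)).
  - apply has_sum_add; apply usum_spec, weighted_summable; auto.
  - apply functional_extensionality; intro s; unfold weighted, fadd; ring.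
Qed.

Lemma weighted_sum_scale (c : C) f : is_l1 f ->
  usum (weighted (fscale c f) chi) = Cmul c (usum (weighted f chi)).
Proof.
  intros hf. apply usum_eq.
  replace (weighted (fscale c f) chi) with (fun s => Cmul c (weighted f chi s)).
  - apply has_sum_scale, usum_spec, weighted_summable; auto.
  - apply functional_extensionality; intro s; unfold weighted, fscale; ring.
Qed.

Lemma weighted_sum_bound f : is_l1 f -> Cnorm (usum (weighted f chi)) <= l1norm f.
Proof.
  intros hf. eapply Rle_trans; [apply usum_bound, weighted_summable; auto|].
  apply Ssup_le; [apply weighted_summable; auto|].
  intros l hl. eapply Rle_trans; [apply (rsum_le _ (fun s => Cnorm (f s)))|].
  - intros; apply weighted_le.
  - apply Ssup_ge; auto.
Qed.

(* Multiplicativity on l^1(S): regroup the product sum along the fibres of op. *)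
Lemma weighted_sum_conv (op : S -> S -> S) f g :
  (forall x y, chi (op x y) = chi x * chi y) -> is_l1 f -> is_l1 g ->
  usum (weighted (conv op f g) chi) = Cmul (usum (weighted f chi)) (usum (weighted g chi)).
Proof.
  intros hmul hf hg.
  set (a := weighted f chi). set (b := weighted g chi).
  assert (ha : csummable a) by (apply weighted_summable; auto).
  assert (hb : csummable b) by (apply weighted_summable; auto).
  set (F := fun p : S * S => Cmul (a (fst p)) (b (snd p))).
  set (F0 := fun p : S * S => Cmul (f (fst p)) (g (snd p))).
  set (pi := fun p : S * S => op (fst p) (snd p)).
  assert (hF0 : csummable F0) by (apply prod_summable; auto).
  (* on the fibre over s, F is chi(s) times F0 *)
  assert (E : (fun s => usum (fib pi F s)) = weighted (conv op f g) chi).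
  { apply functional_extensionality. intro s.
    assert (E2 : fib pi F s = fun p => Cmul (Creal (chi s)) (fib pi F0 s p)).
    { apply functional_extensionality. intros [x y]. unfold fib, pi, F, F0, a, b, weighted; simpl.
      destruct excluded_middle_informative as [e|ne]; [subst s; rewrite hmul|]; cring. }
    rewrite E2, (usum_eq _ _ (has_sum_scale (Creal (chi s)) _ _ (usum_spec _ (csummable_fib pi F0 hF0 s)))).
    unfold weighted, conv.
    change (fun p : S * S => if excluded_middle_informative (op (fst p) (snd p) = s)
                             then Cmul (f (fst p)) (g (snd p)) else C0) with (fib pi F0 s).
    ring. }
  pose proof (fiber_sum pi F (prod_summable a b ha hb)) as hfs.
  rewrite E in hfs. rewrite (usum_eq _ _ hfs). apply usum_eq, has_sum_prod; auto.
Qed.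

End L1.

(** * From the semilattice to l^1(S) *)

Section Extension.
Context {S : Type}.

Definition extension (P : M2) (c1 c2 : S -> R) (f : S -> C) : M2 :=
  Madd (Mscale (usum (weighted f c1)) P) (Mscale (usum (weighted f c2)) (Msub MI P)).

Variable N : M2 -> R.
Hypothesis hN : is_norm_M2 N.
Variables (P : M2) (c1 c2 : S -> R).
Hypotheses (c1_01 : forall x, c1 x = 0 \/ c1 x = 1) (c2_01 : forall x, c2 x = 0 \/ c2 x = 1).

Lemma extension_bounded_linear : bounded_linear N (extension P c1 c2).
Proof.
  split; [|split].
  - intros f g hf hg. unfold extension. rewrite !weighted_sum_add; auto. mat_ring.
  - intros c f hf. unfold extension. rewrite !weighted_sum_scale; auto. mat_ring.
  - exists (N P + N (Msub MI P)). intros f hf. unfold extension.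
    eapply Rle_trans; [apply N_triangle; auto|]. rewrite !(N_scale N hN).
    pose proof (weighted_sum_bound c1 c1_01 f hf). pose proof (weighted_sum_bound c2 c2_01 f hf).
    pose proof (N_nonneg N hN P). pose proof (N_nonneg N hN (Msub MI P)).
    pose proof (Cnorm_nonneg (usum (weighted f c1))). pose proof (Cnorm_nonneg (usum (weighted f c2))).
    nra.
Qed.

Lemma extension_multiplicative (op : S -> S -> S) : Mmul P P = P ->
  (forall x y, c1 (op x y) = c1 x * c1 y) -> (forall x y, c2 (op x y) = c2 x * c2 y) ->
  multiplicative_map op (extension P c1 c2).
Proof.
  intros hP m1 m2 f g hf hg. unfold extension.
  rewrite !weighted_sum_conv; auto.
  set (a1 := usum (weighted f c1)). set (a2 := usum (weighted f c2)).
  set (b1 := usum (weighted g c1)). set (b2 := usum (weighted g c2)).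
  transitivity (Madd (Madd (Mscale (Cmul a1 b1) (Mmul P P)) (Mscale (Cmul a1 b2) (Msub P (Mmul P P))))
                     (Madd (Mscale (Cmul a2 b1) (Msub P (Mmul P P)))
                           (Mscale (Cmul a2 b2) (Madd (Msub MI (Madd P P)) (Mmul P P))))).
  - rewrite hP. mat_ring.
  - mat_ring.
Qed.

End Extension.

Definition msum {I} (g : I -> M2) (l : list I) : M2 := fold_right (fun s acc => Madd (g s) acc) M0 l.

Lemma N_msum {I} N (hN : is_norm_M2 N) (g : I -> M2) l : N (msum g l) <= rsum_list (fun s => N (g s)) l.
Proof.
  induction l; simpl; [rewrite N_M0; auto; lra|].
  eapply Rle_trans; [apply N_triangle; auto | lra].
Qed.

Section Decomposition.
Context {S : Type}.

Definition restrict (f : S -> C) (m : list S) : S -> C :=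
  fun s => if excluded_middle_informative (In s m) then f s else C0.
Definition outside (f : S -> C) (m : list S) : S -> C :=
  fun s => if excluded_middle_informative (In s m) then C0 else f s.

Lemma restrict_l1 f m : NoDup m -> is_l1 (restrict f m).
Proof.
  intro h. apply (finite_l1 _ m h). intros s hs. unfold restrict.
  destruct excluded_middle_informative; tauto.
Qed.

Lemma outside_l1 f m : is_l1 f -> is_l1 (outside f m).
Proof.
  intro hf. apply (bnd_le _ (fun s => Cnorm (f s))); auto. intro i. unfold outside.
  destruct excluded_middle_informative; [rewrite Cnorm_C0; apply Cnorm_nonneg | lra].
Qed.

Variables (N : M2 -> R) (T : (S -> C) -> M2).
Hypothesis hT : bounded_linear N T.

Lemma T_zero : T (fun _ => C0) = M0.
Proof.
  destruct hT as [_ [hsc _]].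
  assert (hz : is_l1 (fun _ : S => C0)).
  { exists 0. intros l _. rewrite rsum_zero; [lra|]. intros; apply Cnorm_C0. }
  pose proof (hsc C0 (fun _ => C0) hz). unfold fscale in H.
  replace (fun _ : S => Cmul C0 C0) with (fun _ : S => C0) in H by (apply functional_extensionality; intro; ring).
  rewrite H. mat_ring.
Qed.

Lemma T_restrict f m : NoDup m -> T (restrict f m) = msum (fun s => Mscale (f s) (T (point_mass s))) m.
Proof.
  intros hm. destruct hT as [hadd [hsc _]]. induction hm; simpl.
  - replace (restrict f []) with (fun _ : S => C0); [apply T_zero|].
    apply functional_extensionality; intro s; unfold restrict; destruct excluded_middle_informative; simpl in *; tauto.
  - replace (restrict f (x :: l)) with (fadd (fscale (f x) (point_mass x)) (restrict f l)).
    + assert (hl1 : is_l1 (fscale (f x) (point_mass x))).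
      { apply (finite_l1 _ [x]); [repeat constructor; auto|].
        intros s hs. unfold fscale. rewrite point_mass_outside; auto. ring. }
      rewrite (hadd _ _ hl1 (restrict_l1 f l hm)), (hsc (f x) (point_mass x) (point_mass_l1 x)), IHhm. reflexivity.
    + apply functional_extensionality; intro s. unfold fadd, fscale, restrict, point_mass.
      destruct (excluded_middle_informative (s = x)) as [e|ne].
      * subst. destruct (excluded_middle_informative (In x l)); try contradiction.
        destruct (excluded_middle_informative (In x (x :: l))); [cring|].
        exfalso; apply n0; left; auto.
      * destruct (excluded_middle_informative (In s l)); destruct (excluded_middle_informative (In s (x :: l)));
          simpl in *; try tauto; try (exfalso; intuition congruence); cring.
Qed.

Lemma T_decompose f m : is_l1 f -> NoDup m ->
  T f = Madd (msum (fun s => Mscale (f s) (T (point_mass s))) m) (T (outside f m)).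
Proof.
  intros hf hm. destruct hT as [hadd _].
  replace f with (fadd (restrict f m) (outside f m)) at 1.
  - rewrite hadd; auto using restrict_l1, outside_l1. rewrite T_restrict; auto.
  - apply functional_extensionality; intro s. unfold fadd, restrict, outside.
    destruct excluded_middle_informative; cring.
Qed.

End Decomposition.

Lemma outside_norm {S} (f : S -> C) (m : list S) eta : is_l1 f -> NoDup m ->
  (forall l, NoDup l -> (forall x, In x l -> ~ In x m) -> rsum_list (fun s => Cnorm (f s)) l <= eta) ->
  l1norm (outside f m) <= eta.
Proof.
  intros hf hm tail. apply Ssup_le; [apply outside_l1; auto|]. intros l hl.
  rewrite (rsum_filter_zero _ (fun x => if in_dec deq x m then false else true)).
  - rewrite (rsum_ext _ (fun s => Cnorm (f s))).
    + apply tail; [apply NoDup_filter; auto|]. intros x hx. apply filter_In in hx.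
      destruct hx as [_ hx]. destruct in_dec; [discriminate | auto].
    + intros i hi. apply filter_In in hi. destruct hi as [_ hi]. unfold outside.
      destruct in_dec; [discriminate|]. destruct excluded_middle_informative; tauto.
  - intros i _ hp. unfold outside. destruct in_dec; [|discriminate].
    destruct excluded_middle_informative; [apply Cnorm_C0 | contradiction].
Qed.

Lemma msum_sub {I} (g h : I -> M2) l : msum (fun s => Msub (g s) (h s)) l = Msub (msum g l) (msum h l).
Proof. induction l; simpl; [mat_ring|]. rewrite IHl. mat_ring. Qed.

Lemma msum_split_map {S} (f : S -> C) P (c1 c2 : S -> R) l :
  msum (fun s => Mscale (f s) (split_map P (c1 s) (c2 s))) l =
  Madd (Mscale (csum_list (weighted f c1) l) P) (Mscale (csum_list (weighted f c2) l) (Msub MI P)).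
Proof. induction l; simpl; [mat_ring|]. rewrite IHl. unfold weighted, split_map. mat_ring. Qed.

Lemma extension_error {S} N (T : (S -> C) -> M2) (hT : bounded_linear N T) P (c1 c2 : S -> R)
  f l : is_l1 f -> NoDup l ->
  Msub (T f) (extension P c1 c2 f) =
  Madd (Madd (T (outside f l))
             (msum (fun s => Mscale (f s) (Msub (T (point_mass s)) (split_map P (c1 s) (c2 s)))) l))
       (Madd (Mscale (Csub (csum_list (weighted f c1) l) (usum (weighted f c1))) P)
             (Mscale (Csub (csum_list (weighted f c2) l) (usum (weighted f c2))) (Msub MI P))).
Proof.
  intros hf hl. rewrite (T_decompose N T hT f l hf hl).
  replace (msum (fun s => Mscale (f s) (Msub (T (point_mass s)) (split_map P (c1 s) (c2 s)))) l) with
    (Msub (msum (fun s => Mscale (f s) (T (point_mass s))) l)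
          (msum (fun s => Mscale (f s) (split_map P (c1 s) (c2 s))) l)).
  - rewrite msum_split_map. unfold extension. mat_ring.
  - rewrite <- msum_sub. f_equal. apply functional_extensionality; intro s. mat_ring.
Qed.

Lemma N_msum_pointwise {S} N (hN : is_norm_M2 N) (f : S -> C) (E : S -> M2) (be : R) l :
  is_l1 f -> NoDup l -> 0 <= be -> (forall s, N (E s) <= be) ->
  N (msum (fun s => Mscale (f s) (E s)) l) <= be * l1norm f.
Proof.
  intros hf hl hbe hE.
  eapply Rle_trans; [apply N_msum; auto|].
  eapply Rle_trans; [apply (rsum_le _ (fun s => be * Cnorm (f s)))|].
  - intros i _. rewrite (N_scale N hN), Rmult_comm. apply Rmult_le_compat_r; [apply Cnorm_nonneg | apply hE].
  - rewrite rsum_scale. apply Rmult_le_compat_l; auto. apply Ssup_ge; auto.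
Qed.

Lemma extension_close {S} N (hN : is_norm_M2 N) (T : (S -> C) -> M2) (hT : bounded_linear N T)
  P (c1 c2 : S -> R) (c1_01 : forall x, c1 x = 0 \/ c1 x = 1) (c2_01 : forall x, c2 x = 0 \/ c2 x = 1)
  (be : R) : 0 <= be ->
  (forall s, N (Msub (T (point_mass s)) (split_map P (c1 s) (c2 s))) <= be) ->
  forall f, is_l1 f -> N (Msub (T f) (extension P c1 c2 f)) <= be * l1norm f.
Proof.
  intros hbe hpt f hf.
  pose proof hT as [_ [_ [K hK]]].
  set (K' := Rmax K 0). assert (hK0 : 0 <= K') by apply Rmax_r.
  assert (hK' : forall g, is_l1 g -> N (T g) <= K' * l1norm g).
  { intros g hg. eapply Rle_trans; [apply hK; auto|].
    apply Rmult_le_compat_r; [apply l1norm_nonneg; auto | apply Rmax_l]. }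
  set (Q := Msub MI P).
  pose proof (N_nonneg N hN P). pose proof (N_nonneg N hN Q).
  apply le_epsilon. intros eps he.
  set (eta := eps / (K' + N P + N Q + 1)).
  assert (het : 0 < eta) by (unfold eta; apply Rdiv_lt_0_compat; lra).
  assert (hetb : eta * (K' + N P + N Q) <= eps).
  { unfold eta. apply Rmult_le_reg_r with (K' + N P + N Q + 1); [lra|].
    replace (eps / (K' + N P + N Q + 1) * (K' + N P + N Q) * (K' + N P + N Q + 1))
      with (eps * (K' + N P + N Q)) by (field; lra).
    nra. }
  (* a finite set carrying f up to eta, on which both weighted sums are eta-accurate *)
  destruct (small_tail _ eta hf (fun _ => Cnorm_nonneg _) het) as [la [hla tail]].
  destruct (usum_spec (weighted f c1) (weighted_summable c1 c1_01 f hf) eta het) as [lb [hlb sb]].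
  destruct (usum_spec (weighted f c2) (weighted_summable c2 c2_01 f hf) eta het) as [lc [hlc sc]].
  set (l := lunion (lunion la lb) lc).
  assert (hl : NoDup l) by apply lunion_NoDup.
  specialize (sb l hl (fun x hx => lunion_l _ _ x (lunion_r _ _ x hx))).
  specialize (sc l hl (lunion_r _ _)).
  assert (hout : l1norm (outside f l) <= eta).
  { apply outside_norm; auto. apply tail; auto. intros x hx. apply lunion_l, lunion_l; auto. }
  rewrite (extension_error N T hT P c1 c2 f l hf hl). fold Q.
  eapply Rle_trans; [apply N_triangle; auto|].
  eapply Rle_trans; [apply Rplus_le_compat; apply N_triangle; auto|].
  rewrite !(N_scale N hN).
  pose proof (hK' _ (outside_l1 f l hf)).
  pose proof (N_msum_pointwise N hN f _ be l hf hl hbe hpt).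
  assert (K' * l1norm (outside f l) <= K' * eta) by (apply Rmult_le_compat_l; auto).
  assert (Cnorm (Csub (csum_list (weighted f c1) l) (usum (weighted f c1))) * N P <= eta * N P)
    by (apply Rmult_le_compat_r; lra).
  assert (Cnorm (Csub (csum_list (weighted f c2) l) (usum (weighted f c2))) * N Q <= eta * N Q)
    by (apply Rmult_le_compat_r; lra).
  nra.
Qed.

Lemma split_map_character {S} (op : S -> S -> S) P (c1 c2 : S -> R) : Mmul P P = P ->
  (forall x, (c1 x = 0 \/ c1 x = 1) /\ (c2 x = 0 \/ c2 x = 1)) ->
  (forall x y, c1 (op x y) = c1 x * c1 y /\ c2 (op x y) = c2 x * c2 y) ->
  let phi := fun x => split_map P (c1 x) (c2 x) in
  (forall e f, phi (op e f) = Mmul (phi e) (phi f)) /\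
  (forall x, Mmul (phi x) (phi x) = phi x) /\
  (forall x y, Mmul (phi x) (phi y) = Mmul (phi y) (phi x)).
Proof.
  intros hP h01 hmul phi. unfold phi. split; [|split].
  - intros e f. rewrite split_map_mul by auto. destruct (hmul e f) as [-> ->]. reflexivity.
  - intro x. rewrite split_map_mul by auto.
    destruct (h01 x) as [[-> | ->] [-> | ->]]; f_equal; ring.
  - intros x y. rewrite !split_map_mul by auto. f_equal; ring.
Qed.

Lemma point_mass_defect {S} (op : S -> S -> S) N (hN : is_norm_M2 N) (T : (S -> C) -> M2) dl :
  defect_le op N T dl ->
  forall e f, N (Msub (Mmul (T (point_mass e)) (T (point_mass f))) (T (point_mass (op e f)))) <= dl.
Proof.
  intros hdef e f. rewrite (N_sub_sym N hN), <- conv_point_mass.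
  apply hdef; try apply point_mass_l1; rewrite point_mass_norm; lra.
Qed.

Lemma choose_delta (c L eps : R) : 0 < c -> 0 < L -> 0 < eps ->
  exists dl, 0 < dl /\ c * dl <= 0.029 /\ L * (12 * (c * dl)) <= eps.
Proof.
  intros hc hL he. exists (Rmin (0.029 / c) (eps / (12 * c * L))). split; [|split].
  - apply Rmin_pos; apply Rdiv_lt_0_compat; nra.
  - pose proof (Rmin_l (0.029 / c) (eps / (12 * c * L))).
    apply Rmult_le_compat_l with (r := c) in H; [|lra].
    replace (c * (0.029 / c)) with 0.029 in H by (field; lra). lra.
  - pose proof (Rmin_r (0.029 / c) (eps / (12 * c * L))).
    apply Rmult_le_compat_l with (r := 12 * c * L) in H; [|nra].
    replace (12 * c * L * (eps / (12 * c * L))) with eps in H by (field; lra). lra.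
Qed.

(* The l^1 statement: approximate the point-mass map on S, then extend linearly. *)
Theorem l1_uniformly_AMNM (S : Type) (op : S -> S -> S) (hS : is_semilattice S op)
  (N : M2 -> R) (hN : is_norm_M2 N) : uniformly_AMNM_l1_M2 op N.
Proof.
  intros eps he.
  destruct (N_upper N hN) as [L [hL hLA]]. destruct (N_lower N hN) as [c [hc hcA]].
  destruct (choose_delta c L eps hc hL he) as [dl [hdl [hdl1 hdl2]]].
  exists dl. split; auto. intros T hT hdef.
  set (th := fun s => T (point_mass s)).
  assert (herr : forall e f, HS (Msub (Mmul (th e) (th f)) (th (op e f))) <= c * dl).
  { intros e f. eapply Rle_trans; [apply hcA|].
    apply Rmult_le_compat_l; [lra | apply (point_mass_defect op N hN T dl hdef)]. }
  destruct (character_approximation S op th (c * dl) hS ltac:(nra) ltac:(lra) herr)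
    as [P [c1 [c2 [hP [h01 [hm hb]]]]]].
  exists (extension P c1 c2). split; [|split].
  - apply (extension_bounded_linear N hN P c1 c2); intro x; apply h01.
  - apply (extension_multiplicative P c1 c2); auto; intros; apply h01 || apply hm.
  - intros f hf hf1. eapply Rle_trans.
    + apply (extension_close N hN T hT P c1 c2) with (be := L * (12 * (c * dl))); auto.
      * intro x; apply h01.
      * intro x; apply h01.
      * pose proof (Rmult_lt_0_compat c dl hc hdl). nra.
      * intro s. eapply Rle_trans; [apply hLA|]. apply Rmult_le_compat_l; [lra | apply hb].
    + pose proof (l1norm_nonneg f hf). nra.
Qed.

Theorem theoremt (S : Type) (op : S -> S -> S) (HS_semilattice : is_semilattice S op) :
  (forall (delta : R) (theta : S -> M2),
     0 <= delta -> delta < 0.03 ->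
     (forall e f, HS (Msub (Mmul (theta e) (theta f)) (theta (op e f))) <= delta) ->
     exists phi : S -> M2,
       (forall e f, phi (op e f) = Mmul (phi e) (phi f)) /\
       (forall x, Mmul (phi x) (phi x) = phi x) /\
       (forall x y, Mmul (phi x) (phi y) = Mmul (phi y) (phi x)) /\
       (forall x, HS (Msub (theta x) (phi x)) <= 12 * delta))
  /\
  (forall N : M2 -> R, is_norm_M2 N -> uniformly_AMNM_l1_M2 op N).
Proof.
  split.
  - intros delta theta h0 h1 herr.
    destruct (character_approximation S op theta delta HS_semilattice h0 h1 herr)
      as [P [c1 [c2 [hP [h01 [hm hb]]]]]].
    destruct (split_map_character op P c1 c2 hP h01 hm) as [hmul [hidem hcomm]].
    exists (fun x => split_map P (c1 x) (c2 x)). auto.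
  - intros N hN. apply l1_uniformly_AMNM; auto.
Qed.
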